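(* Let $\mathbf{S}$ ($n\times n$), $\hat{\mathbf{U}}$ ($m\times n$), $\mathbf{V}$ ($n\times m$) be constant complex matrices and $\hat{\mathbf{K}}$ an $n\times n$ matrix with $\mathbf{S}\hat{\mathbf{K}}+\hat{\mathbf{K}}\mathbf{S}=\mathbf{V}\hat{\mathbf{U}}$. Let $\hat{\mathbf{\Xi}}=e^{-2(x\mathbf{S}+t\mathbf{S}^3)}$, $x,t\in\mathbb{R}$. Then, wherever $\mathbf{I}-\hat{\mathbf{K}}\hat{\mathbf{\Xi}}$ is invertible, $u=\phi_x$ with $\phi=\hat{\mathbf{U}}\hat{\mathbf{\Xi}}(\mathbf{I}-\hat{\mathbf{K}}\hat{\mathbf{\Xi}})^{-1}\mathbf{V}$ solves the $m\times m$ matrix KdV equation $u_t-\tfrac14u_{xxx}-\tfrac32(u^2)_x=0$.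
   Context: $\mathbf{I}=I_n$; subscripts $x,t$ denote partial derivatives. *)

(* classical reals, complex numbers as pairs of reals,
   matrices as functions nat -> nat -> Cplx with dimensions passed explicitly. *)
From Stdlib Require Import Reals Lra ClassicalEpsilon Factorial.
Open Scope R_scope.

Record Cplx := mkCplx { re : R; im : R }.

Definition C0 : Cplx := mkCplx 0 0.
Definition C1 : Cplx := mkCplx 1 0.
Definition RtoC (r : R) : Cplx := mkCplx r 0.
Definition Cadd (a b : Cplx) : Cplx := mkCplx (re a + re b) (im a + im b).
Definition Copp (a : Cplx) : Cplx := mkCplx (- re a) (- im a).
Definition Cmul (a b : Cplx) : Cplx :=
  mkCplx (re a * re b - im a * im b) (re a * im b + im a * re b).

Fixpoint Csum (f : nat -> Cplx) (k : nat) : Cplx :=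
  match k with
  | O => C0
  | S k' => Cadd (Csum f k') (f k')
  end.

(* A matrix; only entries with indices below the intended dimensions matter. *)
Definition Mat := nat -> nat -> Cplx.

Definition Mid : Mat := fun i j => if Nat.eqb i j then C1 else C0.
Definition Madd (A B : Mat) : Mat := fun i j => Cadd (A i j) (B i j).
Definition Msub (A B : Mat) : Mat := fun i j => Cadd (A i j) (Copp (B i j)).
Definition Mscale (c : Cplx) (A : Mat) : Mat := fun i j => Cmul c (A i j).
Definition Mmul (p : nat) (A B : Mat) : Mat :=
  fun i j => Csum (fun k => Cmul (A i k) (B k j)) p.
Fixpoint Mpow (n : nat) (A : Mat) (k : nat) : Mat :=
  match k with
  | O => Mid
  | S k' => Mmul n (Mpow n A k') A
  end.

Definition Meq (r c : nat) (A B : Mat) : Prop :=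
  forall i j, (i < r)%nat -> (j < c)%nat -> A i j = B i j.

Definition Ccv (s : nat -> Cplx) (l : Cplx) : Prop :=
  Un_cv (fun N => re (s N)) (re l) /\ Un_cv (fun N => im (s N)) (im l).

Definition Mexp_partial (n : nat) (A : Mat) (N : nat) : Mat :=
  fun i j => Csum (fun k => Cmul (RtoC (/ INR (fact k))) (Mpow n A k i j)) (S N).
Definition Mexp (n : nat) (A : Mat) : Mat :=
  epsilon (inhabits Mid)
    (fun L => forall i j, (i < n)%nat -> (j < n)%nat ->
       Ccv (fun N => Mexp_partial n A N i j) (L i j)).

Definition Minvertible (n : nat) (A : Mat) : Prop :=
  exists B, Meq n n (Mmul n A B) Mid /\ Meq n n (Mmul n B A) Mid.
Definition Minv (n : nat) (A : Mat) : Mat :=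
  epsilon (inhabits Mid)
    (fun B => Meq n n (Mmul n A B) Mid /\ Meq n n (Mmul n B A) Mid).

Definition has_dx (r c : nat) (f : R -> R -> Mat) (x t : R) (L : Mat) : Prop :=
  forall i j, (i < r)%nat -> (j < c)%nat ->
    derivable_pt_lim (fun y => re (f y t i j)) x (re (L i j)) /\
    derivable_pt_lim (fun y => im (f y t i j)) x (im (L i j)).
Definition has_dt (r c : nat) (f : R -> R -> Mat) (x t : R) (L : Mat) : Prop :=
  forall i j, (i < r)%nat -> (j < c)%nat ->
    derivable_pt_lim (fun s => re (f x s i j)) t (re (L i j)) /\
    derivable_pt_lim (fun s => im (f x s i j)) t (im (L i j)).

Definition Xi (n : nat) (S : Mat) (x t : R) : Mat :=
  Mexp n (Madd (Mscale (RtoC (-2 * x)) S) (Mscale (RtoC (-2 * t)) (Mpow n S 3))).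

Definition Phi (n : nat) (S K U V : Mat) (x t : R) : Mat :=
  Mmul n (Mmul n U (Xi n S x t))
         (Mmul n (Minv n (Msub Mid (Mmul n K (Xi n S x t)))) V).

(* Write [W = (I - K Xi)^-1] and [G = Xi W], so that [phi = U G V]. Since [S] commutes with
   [Xi = exp (-2 (x S + t S^3))], the identity [G C - C G = G (K C - C K) G] holds for every [C]
   commuting with [Xi]; combined with [S K + K S = V U] it gives
     [G_x = - (S G + G S + G V U G)],
     [G_t = - (S^3 G + G S^3 + G (S^2 V U - S V U S + V U S^2) G)],
     [S^2 G = G S^2 - G V U S G + G S V U G].
   Hence [u = phi_x] and its derivatives are noncommutative polynomials in [G, S, V, U], and the
   KdV expression vanishes once every interior factor [S S G] is rewritten by the last relation;
   this finite computation is carried out on a symbolic representation of such polynomials.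
   The analytic input is the derivative of the matrix exponential along a commuting direction
   and of matrix inversion, both obtained from explicit norm estimates. *)

From Pilot Require Import Defs.
From Stdlib Require Import Reals Lra Lia ZArith List Ring FunctionalExtensionality ClassicalEpsilon Factorial.
Import ListNotations.
Open Scope R_scope.

Lemma Cplx_ext (a b : Cplx) : re a = re b -> im a = im b -> a = b.
Proof. destruct a, b; simpl; intros; subst; reflexivity. Qed.

Definition Csub (a b : Cplx) : Cplx := Cadd a (Copp b).

Lemma Cplx_ring : ring_theory C0 Defs.C1 Cadd Cmul Csub Copp (@eq Cplx).
Proof.
  constructor; intros; apply Cplx_ext; unfold Csub, Cadd, Cmul, Copp, C0, Defs.C1; simpl; ring.
Qed.
Add Ring Cplx_ring : Cplx_ring.

Lemma Csum_ext f g p : (forall k, (k < p)%nat -> f k = g k) -> Csum f p = Csum g p.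
Proof.
  induction p; intros H; simpl; auto.
  rewrite IHp by (intros; apply H; lia). rewrite H by lia; auto.
Qed.

Lemma Csum_add f g p : Csum (fun k => Cadd (f k) (g k)) p = Cadd (Csum f p) (Csum g p).
Proof. induction p; simpl; [|rewrite IHp]; ring. Qed.

Lemma Csum_opp f p : Csum (fun k => Copp (f k)) p = Copp (Csum f p).
Proof. induction p; simpl; [|rewrite IHp]; ring. Qed.

Lemma Csum_mull c f p : Csum (fun k => Cmul c (f k)) p = Cmul c (Csum f p).
Proof. induction p; simpl; [|rewrite IHp]; ring. Qed.

Lemma Csum_mulr c f p : Csum (fun k => Cmul (f k) c) p = Cmul (Csum f p) c.
Proof. induction p; simpl; [|rewrite IHp]; ring. Qed.

Lemma Csum_zero p : Csum (fun _ => C0) p = C0.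
Proof. induction p; simpl; [|rewrite IHp]; ring. Qed.

Lemma Csum_swap (f : nat -> nat -> Cplx) p q :
  Csum (fun k => Csum (fun l => f k l) q) p = Csum (fun l => Csum (fun k => f k l) p) q.
Proof.
  induction p; simpl.
  - rewrite Csum_zero; auto.
  - rewrite IHp, <- Csum_add; auto.
Qed.

Lemma Csum_shift f p : Csum f (S p) = Cadd (f O) (Csum (fun k => f (S k)) p).
Proof. induction p; simpl in *; [|rewrite IHp]; ring. Qed.

Lemma Csum_telescope (f : nat -> Cplx) p :
  Csum (fun k => Cadd (f k) (Copp (f (S k)))) p = Cadd (f O) (Copp (f p)).
Proof. induction p; simpl; [|rewrite IHp]; ring. Qed.

Lemma Csum_delta_l (f : nat -> Cplx) p i : (i < p)%nat ->
  Csum (fun k => Cmul (if Nat.eqb i k then Defs.C1 else C0) (f k)) p = f i.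
Proof.
  induction p; intros H; [lia|]. simpl.
  destruct (Nat.eq_dec i p).
  - subst. rewrite Nat.eqb_refl, (Csum_ext _ (fun _ => C0)), Csum_zero; [ring|].
    intros k Hk. destruct (Nat.eqb_spec p k); [lia|ring].
  - rewrite IHp by lia. destruct (Nat.eqb_spec i p); [lia|ring].
Qed.

Lemma Csum_delta_r (f : nat -> Cplx) p j : (j < p)%nat ->
  Csum (fun k => Cmul (f k) (if Nat.eqb k j then Defs.C1 else C0)) p = f j.
Proof.
  intros H. rewrite <- (Csum_delta_l f p j H). apply Csum_ext. intros k _.
  destruct (Nat.eqb_spec k j), (Nat.eqb_spec j k); try lia; ring.
Qed.

(** * Matrix algebra *)

Definition Mzero : Mat := fun _ _ => C0.

Ltac mat_ext :=
  let i := fresh "i" in let j := fresh "j" in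
  apply functional_extensionality; intro i; apply functional_extensionality; intro j.

Lemma Mmul_assoc p q A B C : Mmul p (Mmul q A B) C = Mmul q A (Mmul p B C).
Proof.
  mat_ext. unfold Mmul.
  rewrite (Csum_ext _ (fun k => Csum (fun l => Cmul (A i l) (Cmul (B l k) (C k j))) q)).
  - rewrite Csum_swap. apply Csum_ext; intros; rewrite <- Csum_mull; auto.
  - intros k _. rewrite <- Csum_mulr. apply Csum_ext; intros; ring.
Qed.

Lemma Mmul_addl p A B C : Mmul p (Madd A B) C = Madd (Mmul p A C) (Mmul p B C).
Proof. mat_ext. unfold Mmul, Madd. rewrite <- Csum_add. apply Csum_ext; intros; ring. Qed.

Lemma Mmul_addr p A B C : Mmul p A (Madd B C) = Madd (Mmul p A B) (Mmul p A C).
Proof. mat_ext. unfold Mmul, Madd. rewrite <- Csum_add. apply Csum_ext; intros; ring. Qed.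

Lemma Mmul_subl p A B C : Mmul p (Msub A B) C = Msub (Mmul p A C) (Mmul p B C).
Proof.
  mat_ext. unfold Mmul, Msub. rewrite <- Csum_opp, <- Csum_add. apply Csum_ext; intros; ring.
Qed.

Lemma Mmul_subr p A B C : Mmul p A (Msub B C) = Msub (Mmul p A B) (Mmul p A C).
Proof.
  mat_ext. unfold Mmul, Msub. rewrite <- Csum_opp, <- Csum_add. apply Csum_ext; intros; ring.
Qed.

Lemma Mmul_scalel p c A B : Mmul p (Mscale c A) B = Mscale c (Mmul p A B).
Proof. mat_ext. unfold Mmul, Mscale. rewrite <- Csum_mull. apply Csum_ext; intros; ring. Qed.

Lemma Mmul_scaler p c A B : Mmul p A (Mscale c B) = Mscale c (Mmul p A B).
Proof. mat_ext. unfold Mmul, Mscale. rewrite <- Csum_mull. apply Csum_ext; intros; ring. Qed.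

Lemma Mmul_zerol p A : Mmul p Mzero A = Mzero.
Proof. mat_ext. unfold Mmul, Mzero. rewrite (Csum_ext _ (fun _ => C0)), Csum_zero; auto; intros; ring. Qed.

Lemma Mmul_zeror p A : Mmul p A Mzero = Mzero.
Proof. mat_ext. unfold Mmul, Mzero. rewrite (Csum_ext _ (fun _ => C0)), Csum_zero; auto; intros; ring. Qed.

Lemma Madd_zeror A : Madd A Mzero = A.
Proof. mat_ext. unfold Madd, Mzero. ring. Qed.

Lemma Madd_assoc A B C : Madd (Madd A B) C = Madd A (Madd B C).
Proof. mat_ext. unfold Madd. ring. Qed.

Lemma Mscale_zero c : Mscale c Mzero = Mzero.
Proof. mat_ext. unfold Mscale, Mzero. ring. Qed.

Lemma Mscale_Madd c A B : Mscale c (Madd A B) = Madd (Mscale c A) (Mscale c B).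
Proof. mat_ext. unfold Mscale, Madd. ring. Qed.

Lemma Mscale_Mscale c d A : Mscale c (Mscale d A) = Mscale (Cmul c d) A.
Proof. mat_ext. unfold Mscale. ring. Qed.

Lemma Meq_refl r c A : Meq r c A A.
Proof. intros i j _ _; auto. Qed.

Lemma Meq_eq r c A B : A = B -> Meq r c A B.
Proof. intros ->; apply Meq_refl. Qed.

Lemma Meq_sym r c A B : Meq r c A B -> Meq r c B A.
Proof. intros H i j Hi Hj; symmetry; auto. Qed.

Lemma Meq_trans r c A B C : Meq r c A B -> Meq r c B C -> Meq r c A C.
Proof. intros H1 H2 i j Hi Hj; rewrite H1, H2; auto. Qed.

Lemma Meq_Mmul_l r p c A B C : Meq r p A B -> Meq r c (Mmul p A C) (Mmul p B C).
Proof. intros H i j Hi Hj; unfold Mmul; apply Csum_ext; intros; rewrite H; auto. Qed.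

Lemma Meq_Mmul_r r p c A B C : Meq p c B C -> Meq r c (Mmul p A B) (Mmul p A C).
Proof. intros H i j Hi Hj; unfold Mmul; apply Csum_ext; intros; rewrite H; auto. Qed.

Lemma Meq_Madd r c A B C D : Meq r c A B -> Meq r c C D -> Meq r c (Madd A C) (Madd B D).
Proof. intros H1 H2 i j Hi Hj; unfold Madd; rewrite H1, H2; auto. Qed.

Lemma Meq_Msub r c A B C D : Meq r c A B -> Meq r c C D -> Meq r c (Msub A C) (Msub B D).
Proof. intros H1 H2 i j Hi Hj; unfold Msub; rewrite H1, H2; auto. Qed.

Lemma Meq_Mscale r c x A B : Meq r c A B -> Meq r c (Mscale x A) (Mscale x B).
Proof. intros H i j Hi Hj; unfold Mscale; rewrite H; auto. Qed.

Lemma Meq_Msub_zero r c A B : Meq r c (Msub A B) Mzero -> Meq r c A B.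
Proof.
  intros H i j Hi Hj. specialize (H i j Hi Hj). unfold Msub, Mzero in H.
  replace (A i j) with (Cadd (Cadd (A i j) (Copp (B i j))) (B i j)) by ring. rewrite H. ring.
Qed.

(* Only the entries of [B] and [C] below [(p, q)] enter the product, so Leibniz equality holds. *)
Lemma Mmul_Meq_mid p q A B C D :
  Meq p q B C -> Mmul p A (Mmul q B D) = Mmul p A (Mmul q C D).
Proof.
  intros H. mat_ext. unfold Mmul; apply Csum_ext; intros k Hk; f_equal.
  apply Csum_ext; intros; rewrite H; auto.
Qed.

Lemma Mmul_Mid_l n c A : Meq n c (Mmul n Mid A) A.
Proof. intros i j Hi _. unfold Mmul, Mid. apply (Csum_delta_l (fun k => A k j)); auto. Qed.

Lemma Mmul_Mid_r r n A : Meq r n (Mmul n A Mid) A.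
Proof. intros i j _ Hj. unfold Mmul, Mid. apply (Csum_delta_r (fun k => A i k)); auto. Qed.

(** * Derivatives of complex- and matrix-valued functions of one real variable *)

Definition cder (f : R -> Cplx) (z : R) (l : Cplx) : Prop :=
  derivable_pt_lim (fun y => re (f y)) z (re l) /\
  derivable_pt_lim (fun y => im (f y)) z (im l).

Definition mder (r c : nat) (f : R -> Mat) (z : R) (L : Mat) : Prop :=
  forall i j, (i < r)%nat -> (j < c)%nat -> cder (fun y => f y i j) z (L i j).

Lemma cder_const c z : cder (fun _ => c) z C0.
Proof. split; apply derivable_pt_lim_const. Qed.

Lemma cder_add f g z a b :
  cder f z a -> cder g z b -> cder (fun y => Cadd (f y) (g y)) z (Cadd a b).
Proof. intros [H1 H2] [H3 H4]; split; apply derivable_pt_lim_plus; auto. Qed.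

Lemma cder_opp f z a : cder f z a -> cder (fun y => Copp (f y)) z (Copp a).
Proof. intros [H1 H2]; split; apply derivable_pt_lim_opp; auto. Qed.

Lemma cder_mul f g z a b : cder f z a -> cder g z b ->
  cder (fun y => Cmul (f y) (g y)) z (Cadd (Cmul a (g z)) (Cmul (f z) b)).
Proof.
  intros [H1 H2] [H3 H4]; split; simpl.
  - replace (re a * re (g z) - im a * im (g z) + (re (f z) * re b - im (f z) * im b))
      with (re a * re (g z) + re (f z) * re b - (im a * im (g z) + im (f z) * im b)) by ring.
    apply (derivable_pt_lim_minus (fun y => re (f y) * re (g y)) (fun y => im (f y) * im (g y)));
      apply derivable_pt_lim_mult; auto.
  - replace (re a * im (g z) + im a * re (g z) + (re (f z) * im b + im (f z) * re b))
      with (re a * im (g z) + re (f z) * im b + (im a * re (g z) + im (f z) * re b)) by ring.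
    apply (derivable_pt_lim_plus (fun y => re (f y) * im (g y)) (fun y => im (f y) * re (g y)));
      apply derivable_pt_lim_mult; auto.
Qed.

Lemma cder_sum (f : nat -> R -> Cplx) (l : nat -> Cplx) z p :
  (forall k, (k < p)%nat -> cder (f k) z (l k)) ->
  cder (fun y => Csum (fun k => f k y) p) z (Csum l p).
Proof. induction p; intros H; simpl; [apply cder_const|apply cder_add; auto]. Qed.

Lemma mder_Meq r c f z L L' : Meq r c L L' -> mder r c f z L -> mder r c f z L'.
Proof. intros E H i j Hi Hj. rewrite <- E by auto. apply H; auto. Qed.

Lemma mder_ext r c f g z L : (forall y, f y = g y) -> mder r c f z L -> mder r c g z L.
Proof. intros E H. replace g with f by (apply functional_extensionality; auto). auto. Qed.

Lemma mder_const r c (A : Mat) z : mder r c (fun _ => A) z Mzero.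
Proof. intros i j _ _. apply cder_const. Qed.

Lemma mder_add r c f g z L1 L2 : mder r c f z L1 -> mder r c g z L2 ->
  mder r c (fun y => Madd (f y) (g y)) z (Madd L1 L2).
Proof. intros H1 H2 i j Hi Hj. apply cder_add; auto. Qed.

Lemma mder_sub r c f g z L1 L2 : mder r c f z L1 -> mder r c g z L2 ->
  mder r c (fun y => Msub (f y) (g y)) z (Msub L1 L2).
Proof. intros H1 H2 i j Hi Hj. apply cder_add, cder_opp; auto. Qed.

Lemma mder_scale r c x f z L : mder r c f z L ->
  mder r c (fun y => Mscale x (f y)) z (Mscale x L).
Proof.
  intros H i j Hi Hj. unfold Mscale.
  replace (Cmul x (L i j)) with (Cadd (Cmul C0 (f z i j)) (Cmul x (L i j))) by ring.
  apply cder_mul; [apply cder_const|apply H; auto].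
Qed.

Lemma mder_mul r p c f g z L1 L2 : mder r p f z L1 -> mder p c g z L2 ->
  mder r c (fun y => Mmul p (f y) (g y)) z (Madd (Mmul p L1 (g z)) (Mmul p (f z) L2)).
Proof.
  intros H1 H2 i j Hi Hj. unfold Mmul, Madd. rewrite <- Csum_add.
  apply cder_sum. intros k Hk. apply cder_mul; auto.
Qed.

(* The l1 norm, equivalent to the modulus and free of square roots. *)
Definition cnorm (z : Cplx) : R := Rabs (re z) + Rabs (im z).

Lemma cnorm_pos z : 0 <= cnorm z.
Proof. unfold cnorm; pose proof (Rabs_pos (re z)); pose proof (Rabs_pos (im z)); lra. Qed.

Lemma cnorm_add a b : cnorm (Cadd a b) <= cnorm a + cnorm b.
Proof.
  unfold cnorm; simpl.
  pose proof (Rabs_triang (re a) (re b)); pose proof (Rabs_triang (im a) (im b)); lra.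
Qed.

Lemma cnorm_opp a : cnorm (Copp a) = cnorm a.
Proof. unfold cnorm; simpl; rewrite !Rabs_Ropp; auto. Qed.

Lemma cnorm_mul a b : cnorm (Cmul a b) <= cnorm a * cnorm b.
Proof.
  unfold cnorm; simpl.
  pose proof (Rabs_triang (re a * re b) (- (im a * im b))) as H1.
  pose proof (Rabs_triang (re a * im b) (im a * re b)) as H2.
  rewrite Rabs_Ropp in H1. rewrite !Rabs_mult in H1, H2.
  unfold Rminus. nra.
Qed.

Lemma cnorm_RtoC r : cnorm (RtoC r) = Rabs r.
Proof. unfold cnorm; simpl; rewrite Rabs_R0; ring. Qed.

Lemma cnorm_C0 : cnorm C0 = 0.
Proof. unfold cnorm; simpl; rewrite Rabs_R0; ring. Qed.

Lemma Rabs_re_le_cnorm z : Rabs (re z) <= cnorm z.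
Proof. unfold cnorm; pose proof (Rabs_pos (im z)); lra. Qed.

Lemma Rabs_im_le_cnorm z : Rabs (im z) <= cnorm z.
Proof. unfold cnorm; pose proof (Rabs_pos (re z)); lra. Qed.

Fixpoint Rsum (f : nat -> R) (k : nat) : R :=
  match k with O => 0 | S k' => Rsum f k' + f k' end.

Lemma Rsum_le f g p : (forall k, (k < p)%nat -> f k <= g k) -> Rsum f p <= Rsum g p.
Proof.
  induction p; intros H; simpl; [lra|].
  pose proof (H p ltac:(lia)). pose proof (IHp ltac:(intros; apply H; lia)). lra.
Qed.

Lemma Rsum_pos f p : (forall k, (k < p)%nat -> 0 <= f k) -> 0 <= Rsum f p.
Proof.
  induction p; intros H; simpl; [lra|].
  pose proof (H p ltac:(lia)). pose proof (IHp ltac:(intros; apply H; lia)). lra.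
Qed.

Lemma Rsum_add f g p : Rsum (fun k => f k + g k) p = Rsum f p + Rsum g p.
Proof. induction p; simpl; [|rewrite IHp]; ring. Qed.

Lemma Rsum_mull c f p : Rsum (fun k => c * f k) p = c * Rsum f p.
Proof. induction p; simpl; [|rewrite IHp]; ring. Qed.

Lemma Rsum_const c p : Rsum (fun _ => c) p = INR p * c.
Proof. induction p; simpl Rsum; [simpl|rewrite IHp, S_INR]; ring. Qed.

Lemma Rsum_ext f g p : (forall k, (k < p)%nat -> f k = g k) -> Rsum f p = Rsum g p.
Proof.
  induction p; intros H; simpl; auto.
  rewrite IHp by (intros; apply H; lia). rewrite H by lia; auto.
Qed.

Lemma Rsum_swap (f : nat -> nat -> R) p q :
  Rsum (fun k => Rsum (fun l => f k l) q) p = Rsum (fun l => Rsum (fun k => f k l) p) q.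
Proof.
  induction p; simpl.
  - induction q; simpl; [auto|rewrite <- IHq; ring].
  - rewrite IHp, <- Rsum_add; auto.
Qed.

Lemma Rsum_ge_term f p k : (forall k, (k < p)%nat -> 0 <= f k) -> (k < p)%nat -> f k <= Rsum f p.
Proof.
  induction p; intros H Hk; [lia|]. simpl.
  assert (0 <= Rsum f p) by (apply Rsum_pos; intros; apply H; lia).
  destruct (Nat.eq_dec k p); [subst; lra|].
  pose proof (IHp ltac:(intros; apply H; lia) ltac:(lia)). pose proof (H p ltac:(lia)). lra.
Qed.

Lemma Rsum_sum_f_R0 (f : nat -> R) N : Rsum f (S N) = sum_f_R0 f N.
Proof. induction N; simpl in *; [ring|rewrite <- IHN; auto]. Qed.

Lemma cnorm_Csum f p : cnorm (Csum f p) <= Rsum (fun k => cnorm (f k)) p.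
Proof.
  induction p; simpl; [rewrite cnorm_C0; lra|].
  pose proof (cnorm_add (Csum f p) (f p)); lra.
Qed.

(* The maximal row sum of the [n x n] block, a submultiplicative matrix norm. *)
Definition row_bound (n : nat) (X : Mat) (a : R) : Prop :=
  forall i, (i < n)%nat -> Rsum (fun j => cnorm (X i j)) n <= a.

Lemma row_bound_entry n X a i j :
  row_bound n X a -> (i < n)%nat -> (j < n)%nat -> cnorm (X i j) <= a.
Proof.
  intros H Hi Hj. eapply Rle_trans; [|apply (H i Hi)].
  apply (Rsum_ge_term (fun j => cnorm (X i j))); auto. intros; apply cnorm_pos.
Qed.

Lemma row_bound_of_entry n X c :
  (forall i j, (i < n)%nat -> (j < n)%nat -> cnorm (X i j) <= c) -> row_bound n X (INR n * c).
Proof. intros H i Hi. rewrite <- Rsum_const. apply Rsum_le; intros; apply H; auto. Qed.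

Lemma row_bound_le n X a b : row_bound n X a -> a <= b -> row_bound n X b.
Proof. intros H Hab i Hi; specialize (H i Hi); lra. Qed.

Lemma row_bound_Meq n X Y a : Meq n n X Y -> row_bound n X a -> row_bound n Y a.
Proof.
  intros E H i Hi. rewrite <- (Rsum_ext (fun j => cnorm (X i j))); [apply H; auto|].
  intros; rewrite E; auto.
Qed.

Lemma row_bound_exists n X : exists a, 0 <= a /\ row_bound n X a.
Proof.
  exists (Rsum (fun i => Rsum (fun j => cnorm (X i j)) n) n). split.
  - apply Rsum_pos; intros; apply Rsum_pos; intros; apply cnorm_pos.
  - intros i Hi. apply (Rsum_ge_term (fun i => Rsum (fun j => cnorm (X i j)) n)); auto.
    intros; apply Rsum_pos; intros; apply cnorm_pos.
Qed.

Lemma row_bound_mul n X Y a b :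
  row_bound n X a -> row_bound n Y b -> 0 <= b -> row_bound n (Mmul n X Y) (a * b).
Proof.
  intros HX HY Hb i Hi.
  apply Rle_trans with (Rsum (fun j => Rsum (fun k => cnorm (X i k) * cnorm (Y k j)) n) n).
  { apply Rsum_le. intros j Hj. eapply Rle_trans; [apply cnorm_Csum|].
    apply Rsum_le. intros; apply cnorm_mul. }
  rewrite Rsum_swap.
  apply Rle_trans with (Rsum (fun k => b * cnorm (X i k)) n).
  { apply Rsum_le. intros k Hk. rewrite Rsum_mull, Rmult_comm.
    apply Rmult_le_compat_r; [apply cnorm_pos|apply HY; auto]. }
  rewrite Rsum_mull, Rmult_comm. apply Rmult_le_compat_r; auto.
Qed.

Lemma row_bound_add n X Y a b : row_bound n X a -> row_bound n Y b -> row_bound n (Madd X Y) (a + b).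
Proof.
  intros HX HY i Hi. eapply Rle_trans.
  - apply Rsum_le with (g := fun j => cnorm (X i j) + cnorm (Y i j)). intros; apply cnorm_add.
  - rewrite Rsum_add. specialize (HX i Hi); specialize (HY i Hi); lra.
Qed.

Lemma row_bound_scale n c X a : row_bound n X a -> row_bound n (Mscale c X) (cnorm c * a).
Proof.
  intros HX i Hi. eapply Rle_trans.
  - apply Rsum_le with (g := fun j => cnorm c * cnorm (X i j)). intros; apply cnorm_mul.
  - rewrite Rsum_mull. apply Rmult_le_compat_l; [apply cnorm_pos|auto].
Qed.

Lemma row_bound_zero n : row_bound n Mzero 0.
Proof.
  intros i Hi. rewrite (Rsum_ext _ (fun _ => 0)), Rsum_const; [lra|]. intros; apply cnorm_C0.
Qed.

Lemma row_bound_Mid n : row_bound n Mid 1.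
Proof.
  intros i Hi. rewrite (Rsum_ext _ (fun j => if Nat.eqb i j then 1 else 0)).
  - induction n as [|n IH]; [lia|]. simpl. destruct (Nat.eq_dec i n) as [->|].
    + rewrite Nat.eqb_refl, (Rsum_ext _ (fun _ => 0)), Rsum_const; [lra|].
      intros k Hk. destruct (Nat.eqb_spec n k); [lia|auto].
    + destruct (Nat.eqb_spec i n); [lia|]. specialize (IH ltac:(lia)). lra.
  - intros j _. unfold Mid, cnorm. destruct (Nat.eqb i j); simpl; rewrite ?Rabs_R0, ?Rabs_R1; ring.
Qed.

Lemma row_bound_pow n A a k : row_bound n A a -> 0 <= a -> row_bound n (Mpow n A k) (a ^ k).
Proof.
  intros H Ha. induction k; simpl; [apply row_bound_Mid|].
  rewrite Rmult_comm. apply row_bound_mul; auto.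
Qed.

Lemma Ccv_unique s l1 l2 : Ccv s l1 -> Ccv s l2 -> l1 = l2.
Proof. intros [H1 H2] [H3 H4]. apply Cplx_ext; eapply UL_sequence; eauto. Qed.

Lemma Ccv_const c : Ccv (fun _ => c) c.
Proof. split; intros e He; exists O; intros; unfold Rdist; rewrite Rminus_diag, Rabs_R0; auto. Qed.

Lemma Ccv_add s t a b : Ccv s a -> Ccv t b -> Ccv (fun N => Cadd (s N) (t N)) (Cadd a b).
Proof. intros [H1 H2] [H3 H4]; split; simpl; apply CV_plus; auto. Qed.

Lemma Ccv_opp s a : Ccv s a -> Ccv (fun N => Copp (s N)) (Copp a).
Proof. intros [H1 H2]; split; simpl; apply CV_opp; auto. Qed.

Lemma Ccv_mul s t a b : Ccv s a -> Ccv t b -> Ccv (fun N => Cmul (s N) (t N)) (Cmul a b).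
Proof.
  intros [H1 H2] [H3 H4]; split; simpl; [apply CV_minus|apply CV_plus]; apply CV_mult; auto.
Qed.

Lemma Ccv_sum (s : nat -> nat -> Cplx) (l : nat -> Cplx) p :
  (forall k, (k < p)%nat -> Ccv (fun N => s N k) (l k)) -> Ccv (fun N => Csum (s N) p) (Csum l p).
Proof. induction p; intros H; simpl; [apply Ccv_const|apply Ccv_add; auto]. Qed.

Lemma Ccv_ext s t l : (forall N, s N = t N) -> Ccv s l -> Ccv t l.
Proof. intros E H. replace t with s by (apply functional_extensionality; auto). auto. Qed.

Lemma Ccv_shift s l : Ccv s l -> Ccv (fun N => s (S N)) l.
Proof.
  intros [H1 H2]; split; intros e He;
    [destruct (H1 e He) as [N HN]|destruct (H2 e He) as [N HN]];
    exists N; intros k Hk; apply HN; lia.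
Qed.

Lemma Ccv_Mmul_l n (C : Mat) (s : nat -> Mat) (L : Mat) i j :
  (forall k, (k < n)%nat -> Ccv (fun N => s N k j) (L k j)) ->
  Ccv (fun N => Mmul n C (s N) i j) (Mmul n C L i j).
Proof. intros H. apply Ccv_sum. intros k Hk. apply Ccv_mul; [apply Ccv_const|auto]. Qed.

Lemma Ccv_Mmul_r n (C : Mat) (s : nat -> Mat) (L : Mat) i j :
  (forall k, (k < n)%nat -> Ccv (fun N => s N i k) (L i k)) ->
  Ccv (fun N => Mmul n (s N) C i j) (Mmul n L C i j).
Proof. intros H. apply Ccv_sum. intros k Hk. apply Ccv_mul; [auto|apply Ccv_const]. Qed.

Lemma Ccv_norm_le s l r : Ccv s l -> (forall N, cnorm (s N) <= r) -> cnorm l <= r.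
Proof.
  intros [H1 H2] Hb. unfold cnorm.
  apply Rle_cv_lim with (Un := fun N => Rabs (re (s N)) + Rabs (im (s N))) (Vn := fun _ => r).
  - intros N; apply (Hb N).
  - apply CV_plus; apply cv_cvabs; auto.
  - intros e He; exists O; intros; unfold Rdist; rewrite Rminus_diag, Rabs_R0; auto.
Qed.

Lemma Ccv_zero_of_bound s r : (forall K, cnorm (s K) <= r K) -> Un_cv r 0 -> Ccv s C0.
Proof.
  intros Hb Hr. split; intros e He; destruct (Hr e He) as [N HN]; exists N; intros k Hk;
    specialize (HN k Hk); specialize (Hb k); unfold Rdist in *; simpl; rewrite Rminus_0_r in *;
    [pose proof (Rabs_re_le_cnorm (s k))|pose proof (Rabs_im_le_cnorm (s k))];
    rewrite Rabs_right in HN by (apply Rle_ge; eapply Rle_trans; [apply cnorm_pos|apply Hb]); lra.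
Qed.

Lemma real_series_abs_cv (a b : nat -> R) lb :
  (forall k, Rabs (a k) <= b k) -> Un_cv (sum_f_R0 b) lb -> exists l, Un_cv (sum_f_R0 a) l.
Proof.
  intros Hab Hb.
  assert (Habs : {l | Un_cv (fun N => sum_f_R0 (fun k => Rabs (a k)) N) l}).
  { apply Rseries_CV_comp with b. intros k; split; [apply Rabs_pos|auto]. exists lb; auto. }
  apply cv_cauchy_1, cauchy_abs, cv_cauchy_2 in Habs.
  destruct Habs as [l Hl]; exists l; auto.
Qed.

Lemma Csum_re (a : nat -> Cplx) N : re (Csum a (S N)) = sum_f_R0 (fun k => re (a k)) N.
Proof. induction N as [|N IH]; [simpl; ring|]. simpl sum_f_R0. rewrite <- IH. reflexivity. Qed.

Lemma Csum_im (a : nat -> Cplx) N : im (Csum a (S N)) = sum_f_R0 (fun k => im (a k)) N.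
Proof. induction N as [|N IH]; [simpl; ring|]. simpl sum_f_R0. rewrite <- IH. reflexivity. Qed.

Lemma Cseries_cv (a : nat -> Cplx) (b : nat -> R) lb :
  (forall k, cnorm (a k) <= b k) -> Un_cv (sum_f_R0 b) lb ->
  exists l, Ccv (fun N => Csum a (S N)) l.
Proof.
  intros Hab Hb.
  destruct (real_series_abs_cv (fun k => re (a k)) b lb) as [l1 H1]; auto.
  { intros; eapply Rle_trans; [apply Rabs_re_le_cnorm|auto]. }
  destruct (real_series_abs_cv (fun k => im (a k)) b lb) as [l2 H2]; auto.
  { intros; eapply Rle_trans; [apply Rabs_im_le_cnorm|auto]. }
  exists (mkCplx l1 l2). split; simpl.
  - eapply Un_cv_ext; [|exact H1]. intros; symmetry; apply Csum_re.
  - eapply Un_cv_ext; [|exact H2]. intros; symmetry; apply Csum_im.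
Qed.

Lemma Mseries_cv n (T : nat -> Mat) (b : nat -> R) lb :
  (forall k i j, (i < n)%nat -> (j < n)%nat -> cnorm (T k i j) <= b k) ->
  Un_cv (sum_f_R0 b) lb ->
  exists L : Mat, forall i j, (i < n)%nat -> (j < n)%nat ->
    Ccv (fun N => Csum (fun k => T k i j) (S N)) (L i j).
Proof.
  intros Hb Hl.
  exists (fun i j => epsilon (inhabits C0) (fun l => Ccv (fun N => Csum (fun k => T k i j) (S N)) l)).
  intros i j Hi Hj. apply epsilon_spec. eapply Cseries_cv; eauto.
Qed.

(** * The matrix exponential *)

Definition inv_fact (k : nat) : R := / INR (fact k).

Lemma inv_fact_pos k : 0 < inv_fact k.
Proof. apply Rinv_0_lt_compat, INR_fact_lt_0. Qed.

Lemma cnorm_inv_fact k : cnorm (RtoC (inv_fact k)) = inv_fact k.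
Proof. rewrite cnorm_RtoC. apply Rabs_right. left; apply inv_fact_pos. Qed.

Lemma inv_fact_S k : inv_fact (S k) * INR (S k) = inv_fact k.
Proof.
  unfold inv_fact. rewrite fact_simpl, mult_INR. field.
  split; [apply INR_fact_neq_0|apply not_0_INR; lia].
Qed.

Lemma exp_series a : Un_cv (sum_f_R0 (fun k => inv_fact k * a ^ k)) (exp a).
Proof. unfold exp. destruct (exist_exp a) as [l Hl]. exact Hl. Qed.

Lemma exp_partial_le a N : 0 <= a -> sum_f_R0 (fun k => inv_fact k * a ^ k) N <= exp a.
Proof.
  intros Ha. apply growing_ineq.
  - intros M. rewrite tech5.
    assert (0 <= inv_fact (S M) * a ^ S M)
      by (apply Rmult_le_pos; [left; apply inv_fact_pos|apply pow_le; auto]). lra.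
  - apply exp_series.
Qed.

Lemma Mexp_cv n A i j : (i < n)%nat -> (j < n)%nat ->
  Ccv (fun N => Mexp_partial n A N i j) (Mexp n A i j).
Proof.
  revert i j. destruct (row_bound_exists n A) as [a [Ha0 Ha]].
  unfold Mexp. apply epsilon_spec.
  apply (Mseries_cv n (fun k => Mscale (RtoC (inv_fact k)) (Mpow n A k))
           (fun k => inv_fact k * a ^ k) (exp a)).
  - intros k i j Hi Hj. unfold Mscale. eapply Rle_trans; [apply cnorm_mul|].
    rewrite cnorm_inv_fact. apply Rmult_le_compat_l; [left; apply inv_fact_pos|].
    apply row_bound_entry with n; auto. apply row_bound_pow; auto.
  - apply exp_series.
Qed.

Definition Mcomm (n : nat) (X Y : Mat) : Prop := Meq n n (Mmul n X Y) (Mmul n Y X).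

Lemma Mcomm_sym n X Y : Mcomm n X Y -> Mcomm n Y X.
Proof. unfold Mcomm; intros; apply Meq_sym; auto. Qed.

Lemma Mcomm_refl n X : Mcomm n X X.
Proof. apply Meq_refl. Qed.

Lemma Mcomm_addr n X Y Z : Mcomm n X Y -> Mcomm n X Z -> Mcomm n X (Madd Y Z).
Proof. unfold Mcomm; intros H1 H2. rewrite Mmul_addr, Mmul_addl. apply Meq_Madd; auto. Qed.

Lemma Mcomm_scaler n c X Y : Mcomm n X Y -> Mcomm n X (Mscale c Y).
Proof. unfold Mcomm; intros H1. rewrite Mmul_scaler, Mmul_scalel. apply Meq_Mscale; auto. Qed.

Lemma Mcomm_mull n X Y Z : Mcomm n X Z -> Mcomm n Y Z -> Mcomm n (Mmul n X Y) Z.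
Proof.
  unfold Mcomm; intros H1 H2. rewrite Mmul_assoc.
  eapply Meq_trans; [apply Meq_Mmul_r, H2|]. rewrite <- Mmul_assoc.
  eapply Meq_trans; [apply Meq_Mmul_l, H1|]. rewrite Mmul_assoc. apply Meq_refl.
Qed.

Lemma Mcomm_powr n X A k : Mcomm n X A -> Mcomm n X (Mpow n A k).
Proof.
  intros HA. apply Mcomm_sym. induction k; simpl.
  - intros i j Hi Hj. rewrite (Mmul_Mid_l n n X i j), (Mmul_Mid_r n n X i j); auto.
  - apply Mcomm_mull; auto. apply Mcomm_sym; auto.
Qed.

Lemma Mmul_Mexp_partial_l n C A N i j :
  Mmul n C (Mexp_partial n A N) i j =
  Csum (fun l => Cmul (RtoC (inv_fact l)) (Mmul n C (Mpow n A l) i j)) (S N).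
Proof.
  unfold Mmul at 1, Mexp_partial.
  transitivity (Csum (fun k => Csum (fun l =>
    Cmul (RtoC (inv_fact l)) (Cmul (C i k) (Mpow n A l k j))) (S N)) n).
  - apply Csum_ext; intros. rewrite <- Csum_mull; apply Csum_ext; intros; unfold inv_fact; ring.
  - rewrite Csum_swap. apply Csum_ext; intros. unfold Mmul. rewrite <- Csum_mull. reflexivity.
Qed.

Lemma Mmul_Mexp_partial_r n C A N i j :
  Mmul n (Mexp_partial n A N) C i j =
  Csum (fun l => Cmul (RtoC (inv_fact l)) (Mmul n (Mpow n A l) C i j)) (S N).
Proof.
  unfold Mmul at 1, Mexp_partial.
  transitivity (Csum (fun k => Csum (fun l =>
    Cmul (RtoC (inv_fact l)) (Cmul (Mpow n A l i k) (C k j))) (S N)) n).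
  - apply Csum_ext; intros. rewrite <- Csum_mulr; apply Csum_ext; intros; unfold inv_fact; ring.
  - rewrite Csum_swap. apply Csum_ext; intros. unfold Mmul. rewrite <- Csum_mull. reflexivity.
Qed.

Lemma Mcomm_Mexp n C A : Mcomm n C A -> Mcomm n C (Mexp n A).
Proof.
  intros HC i j Hi Hj.
  apply (Ccv_unique (fun N => Mmul n C (Mexp_partial n A N) i j)).
  - apply Ccv_Mmul_l. intros k Hk. apply Mexp_cv; auto.
  - apply Ccv_ext with (s := fun N => Mmul n (Mexp_partial n A N) C i j).
    + intros N. rewrite Mmul_Mexp_partial_l, Mmul_Mexp_partial_r. apply Csum_ext. intros l _.
      rewrite (Mcomm_powr n C A l HC i j Hi Hj). reflexivity.
    + apply Ccv_Mmul_r. intros k Hk. apply Mexp_cv; auto.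
Qed.

Section PowerIncrements.
Variables (n : nat) (A H : Mat).

Definition pow_diff k := Msub (Mpow n (Madd A H) k) (Mpow n A k).

(* [pow_lin k = k A^(k-1)], the derivative of [A^k] along a direction commuting with [A]. *)
Definition pow_lin k :=
  match k with O => Mzero | S k' => Mscale (RtoC (INR k)) (Mpow n A k') end.

Definition pow_rem k := Msub (pow_diff k) (Mmul n H (pow_lin k)).

Lemma pow_diff_0 : pow_diff 0 = Mzero.
Proof. unfold pow_diff; simpl; mat_ext; unfold Msub, Mzero; ring. Qed.

Lemma pow_diff_S k :
  pow_diff (S k) = Madd (Mmul n (pow_diff k) (Madd A H)) (Mmul n (Mpow n A k) H).
Proof. unfold pow_diff; simpl. rewrite Mmul_subl, !Mmul_addr. mat_ext. unfold Msub, Madd; ring. Qed.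

Lemma pow_lin_S k : pow_lin (S k) = Madd (Mmul n (pow_lin k) A) (Mpow n A k).
Proof.
  destruct k; simpl.
  - rewrite Mmul_zerol. mat_ext. unfold Madd, Mscale, Mzero. apply Cplx_ext; simpl; ring.
  - rewrite Mmul_scalel. mat_ext. unfold Madd, Mscale. apply Cplx_ext; simpl; rewrite ?S_INR; simpl; ring.
Qed.

Hypothesis HAH : Mcomm n H A.

Lemma pow_rem_S k :
  Meq n n (pow_rem (S k)) (Madd (Mmul n (pow_rem k) (Madd A H)) (Mmul n (Mmul n H (pow_lin k)) H)).
Proof.
  unfold pow_rem at 1. rewrite pow_diff_S, pow_lin_S.
  replace (Msub (Madd (Mmul n (pow_diff k) (Madd A H)) (Mmul n (Mpow n A k) H))
             (Mmul n H (Madd (Mmul n (pow_lin k) A) (Mpow n A k))))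
    with (Madd (Madd (Mmul n (pow_rem k) (Madd A H)) (Mmul n (Mmul n H (pow_lin k)) H))
               (Msub (Mmul n (Mpow n A k) H) (Mmul n H (Mpow n A k)))).
  - intros i j Hi Hj. unfold Madd, Msub.
    rewrite (Mcomm_powr n H A k HAH i j Hi Hj). ring.
  - unfold pow_rem. rewrite !Mmul_subl, !Mmul_addr, !Mmul_assoc. mat_ext. unfold Msub, Madd; ring.
Qed.

Variables (a h : R).
Hypothesis Ha : row_bound n A a.
Hypothesis Hh : row_bound n H h.
Hypothesis Ha0 : 0 <= a.
Hypothesis Hh0 : 0 <= h.
Hypothesis Hh1 : h <= 1.

Lemma pow_diff_bound k : row_bound n (pow_diff k) (INR k * h * (a + 1) ^ k).
Proof.
  induction k.
  - rewrite pow_diff_0. simpl. replace (0 * h * 1) with 0 by ring. apply row_bound_zero.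
  - rewrite pow_diff_S.
    apply row_bound_le with (INR k * h * (a + 1) ^ k * (a + h) + a ^ k * h).
    + apply row_bound_add; apply row_bound_mul; auto; try lra.
      * apply row_bound_add; auto.
      * apply row_bound_pow; auto.
    + assert (1 <= (a + 1) ^ k) by (apply pow_R1_Rle; lra).
      assert (a ^ k <= (a + 1) ^ k) by (apply pow_incr; lra).
      rewrite S_INR. simpl. set (P := (a + 1) ^ k) in *. pose proof (pos_INR k).
      assert (INR k * h * P * (a + h) <= INR k * h * P * (a + 1))
        by (apply Rmult_le_compat_l; [repeat apply Rmult_le_pos|]; lra).
      assert (a ^ k * h <= P * (a + 1) * h) by (apply Rmult_le_compat_r; nra).
      nra.
Qed.

Lemma pow_lin_bound k : row_bound n (pow_lin k) (INR k * (a + 1) ^ k).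
Proof.
  destruct k.
  - simpl. replace (0 * 1) with 0 by ring. apply row_bound_zero.
  - eapply row_bound_le; [apply row_bound_scale, row_bound_pow; [exact Ha|exact Ha0]|].
    rewrite cnorm_RtoC, Rabs_right by (apply Rle_ge, pos_INR).
    assert (a ^ k <= (a + 1) ^ k) by (apply pow_incr; lra).
    assert (1 <= (a + 1) ^ k) by (apply pow_R1_Rle; lra).
    pose proof (pos_INR (S k)). apply Rmult_le_compat_l; [lra|]. simpl. nra.
Qed.

Lemma pow_rem_bound k : row_bound n (pow_rem k) (h * h * (INR k * INR k) * (a + 1) ^ k).
Proof.
  induction k.
  - eapply row_bound_Meq; [|apply row_bound_le with 0; [apply row_bound_zero|simpl; lra]].
    unfold pow_rem. simpl pow_lin. rewrite pow_diff_0, Mmul_zeror.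
    apply Meq_eq. mat_ext. unfold Msub, Mzero. ring.
  - eapply row_bound_Meq; [apply Meq_sym, pow_rem_S|].
    apply row_bound_le with
      (h * h * (INR k * INR k) * (a + 1) ^ k * (a + h) + h * (INR k * (a + 1) ^ k) * h).
    + apply row_bound_add; apply row_bound_mul; auto; try lra.
      * apply row_bound_add; auto.
      * apply row_bound_mul; auto. apply pow_lin_bound.
        pose proof (pos_INR k). pose proof (pow_le (a + 1) k ltac:(lra)). nra.
    + assert (1 <= (a + 1) ^ k) by (apply pow_R1_Rle; lra).
      rewrite S_INR. simpl. set (P := (a + 1) ^ k) in *. pose proof (pos_INR k).
      assert (h * h * (INR k * INR k) * P * (a + h) <= h * h * (INR k * INR k) * P * (a + 1)).
      { apply Rmult_le_compat_l; [|lra]. repeat apply Rmult_le_pos; nra. }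
      assert (h * (INR k * P) * h <= h * h * INR k * P * (a + 1)).
      { assert (0 <= h * h * INR k * P) by (repeat apply Rmult_le_pos; lra). nra. }
      assert (0 <= h * h * P * (a + 1)) by (repeat apply Rmult_le_pos; lra).
      nra.
Qed.
End PowerIncrements.

Lemma INR_le_pow2 k : INR k <= 2 ^ k.
Proof.
  induction k; [simpl; lra|]. rewrite S_INR. simpl.
  assert (1 <= 2 ^ k) by (apply pow_R1_Rle; lra). lra.
Qed.

Section ExpIncrements.
Variables (n : nat) (A H : Mat).

Lemma Mexp_partial_diff N i j :
  Cadd (Mexp_partial n (Madd A H) N i j) (Copp (Mexp_partial n A N i j)) =
  Csum (fun k => Cmul (RtoC (inv_fact k)) (pow_diff n A H k i j)) (S N).
Proof.
  unfold Mexp_partial. rewrite <- Csum_opp, <- Csum_add.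
  apply Csum_ext. intros. unfold pow_diff, Msub, inv_fact. ring.
Qed.

(* The partial sums of [H exp A] lag one index behind those of [exp (A + H)]. *)
Lemma Mexp_partial_rem N i j :
  Cadd (Cadd (Mexp_partial n (Madd A H) (S N) i j) (Copp (Mexp_partial n A (S N) i j)))
       (Copp (Mmul n H (Mexp_partial n A N) i j)) =
  Csum (fun k => Cmul (RtoC (inv_fact k)) (pow_rem n A H k i j)) (S (S N)).
Proof.
  unfold pow_rem, Msub.
  rewrite (Csum_ext _ (fun k => Cadd (Cmul (RtoC (inv_fact k)) (pow_diff n A H k i j))
             (Copp (Cmul (RtoC (inv_fact k)) (Mmul n H (pow_lin n A k) i j))))) by (intros; ring).
  rewrite Csum_add, Csum_opp, <- Mexp_partial_diff. f_equal. f_equal.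
  rewrite Csum_shift, Mmul_Mexp_partial_l. simpl pow_lin at 1. rewrite Mmul_zeror.
  unfold Mzero. replace (Cmul (RtoC (inv_fact 0)) C0) with C0 by ring.
  replace (Cadd C0 _) with (Csum (fun k => Cmul (RtoC (inv_fact (S k)))
                              (Mmul n H (pow_lin n A (S k)) i j)) (S N)) by ring.
  apply Csum_ext. intros k _. unfold pow_lin. rewrite Mmul_scaler. unfold Mscale.
  rewrite <- (inv_fact_S k). apply Cplx_ext; simpl; ring.
Qed.

Variables (a h : R).
Hypothesis Ha : row_bound n A a.
Hypothesis Hh : row_bound n H h.
Hypothesis Ha0 : 0 <= a.
Hypothesis Hh0 : 0 <= h.
Hypothesis Hh1 : h <= 1.

Lemma Mexp_diff_bound i j : (i < n)%nat -> (j < n)%nat ->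
  cnorm (Cadd (Mexp n (Madd A H) i j) (Copp (Mexp n A i j))) <= h * exp (2 * (a + 1)).
Proof.
  intros Hi Hj.
  apply (Ccv_norm_le (fun N => Cadd (Mexp_partial n (Madd A H) N i j) (Copp (Mexp_partial n A N i j)))).
  { apply Ccv_add; [|apply Ccv_opp]; apply Mexp_cv; auto. }
  intros N. rewrite Mexp_partial_diff. eapply Rle_trans; [apply cnorm_Csum|].
  apply Rle_trans with (Rsum (fun k => h * (inv_fact k * (2 * (a + 1)) ^ k)) (S N)).
  - apply Rsum_le. intros k _. eapply Rle_trans; [apply cnorm_mul|]. rewrite cnorm_inv_fact.
    pose proof (row_bound_entry _ _ _ i j (pow_diff_bound n A H a h Ha Hh Ha0 Hh0 Hh1 k) Hi Hj).
    pose proof (inv_fact_pos k). pose proof (INR_le_pow2 k). pose proof (pow_le (a + 1) k ltac:(lra)).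
    rewrite Rpow_mult_distr.
    assert (INR k * h * (a + 1) ^ k <= h * (2 ^ k * (a + 1) ^ k)).
    { replace (INR k * h * (a + 1) ^ k) with (h * (INR k * (a + 1) ^ k)) by ring.
      apply Rmult_le_compat_l; auto. apply Rmult_le_compat_r; auto. }
    apply Rle_trans with (inv_fact k * (h * (2 ^ k * (a + 1) ^ k))); [apply Rmult_le_compat_l; lra|].
    right; ring.
  - rewrite Rsum_mull, Rsum_sum_f_R0. apply Rmult_le_compat_l; auto. apply exp_partial_le. lra.
Qed.

Hypothesis HAH : Mcomm n H A.

Lemma Mexp_rem_bound i j : (i < n)%nat -> (j < n)%nat ->
  cnorm (Cadd (Cadd (Mexp n (Madd A H) i j) (Copp (Mexp n A i j))) (Copp (Mmul n H (Mexp n A) i j)))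
   <= h * h * exp (4 * (a + 1)).
Proof.
  intros Hi Hj.
  apply (Ccv_norm_le (fun N =>
    Cadd (Cadd (Mexp_partial n (Madd A H) (S N) i j) (Copp (Mexp_partial n A (S N) i j)))
         (Copp (Mmul n H (Mexp_partial n A N) i j)))).
  { apply Ccv_add; [apply Ccv_add|].
    - apply (Ccv_shift (fun N => Mexp_partial n (Madd A H) N i j)). apply Mexp_cv; auto.
    - apply Ccv_opp, (Ccv_shift (fun N => Mexp_partial n A N i j)). apply Mexp_cv; auto.
    - apply Ccv_opp, Ccv_Mmul_l. intros k Hk. apply Mexp_cv; auto. }
  intros N. rewrite Mexp_partial_rem. eapply Rle_trans; [apply cnorm_Csum|].
  apply Rle_trans with (Rsum (fun k => h * h * (inv_fact k * (4 * (a + 1)) ^ k)) (S (S N))).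
  - apply Rsum_le. intros k _. eapply Rle_trans; [apply cnorm_mul|]. rewrite cnorm_inv_fact.
    pose proof (row_bound_entry _ _ _ i j (pow_rem_bound n A H HAH a h Ha Hh Ha0 Hh0 Hh1 k) Hi Hj).
    pose proof (inv_fact_pos k). pose proof (INR_le_pow2 k). pose proof (pow_le (a + 1) k ltac:(lra)).
    pose proof (pos_INR k). replace 4 with (2 * 2) by ring. rewrite !Rpow_mult_distr.
    assert (INR k * INR k <= 2 ^ k * 2 ^ k) by nra.
    assert (h * h * (INR k * INR k) * (a + 1) ^ k <= h * h * (2 ^ k * 2 ^ k * (a + 1) ^ k)).
    { rewrite Rmult_assoc. apply Rmult_le_compat_l; [nra|]. apply Rmult_le_compat_r; auto. }
    apply Rle_trans with (inv_fact k * (h * h * (2 ^ k * 2 ^ k * (a + 1) ^ k)));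
      [apply Rmult_le_compat_l; lra|right; ring].
  - rewrite Rsum_mull, Rsum_sum_f_R0. apply Rmult_le_compat_l; [nra|]. apply exp_partial_le. lra.
Qed.
End ExpIncrements.

Lemma derivable_pt_lim_quadratic (f : R -> R) z l C d0 : 0 <= C -> 0 < d0 ->
  (forall h, h <> 0 -> Rabs h < d0 -> Rabs (f (z + h) - f z - h * l) <= C * (h * h)) ->
  derivable_pt_lim f z l.
Proof.
  intros HC Hd Hf e He.
  assert (Hpos : 0 < Rmin d0 (e / (C + 1))) by (apply Rmin_pos; [|apply Rdiv_lt_0_compat]; lra).
  exists (mkposreal _ Hpos). simpl. intros h Hh0 Hh.
  pose proof (Rmin_l d0 (e / (C + 1))). pose proof (Rmin_r d0 (e / (C + 1))).
  specialize (Hf h Hh0 ltac:(lra)).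
  assert (Hah : 0 < Rabs h) by (apply Rabs_pos_lt; auto).
  replace ((f (z + h) - f z) / h - l) with ((f (z + h) - f z - h * l) / h) by (field; auto).
  unfold Rdiv. rewrite Rabs_mult, Rabs_inv.
  apply Rle_lt_trans with (C * Rabs h).
  - replace (C * Rabs h) with (C * (h * h) * / Rabs h).
    + apply Rmult_le_compat_r; auto. left; apply Rinv_0_lt_compat; auto.
    + rewrite <- (Rabs_pos_eq (h * h)) by apply Rle_0_sqr. rewrite Rabs_mult. field. lra.
  - assert (Rabs h * (C + 1) < e / (C + 1) * (C + 1)) by (apply Rmult_lt_compat_r; lra).
    replace (e / (C + 1) * (C + 1)) with e in * by (field; lra). nra.
Qed.

Lemma cder_quadratic (g : R -> Cplx) z l C d0 : 0 <= C -> 0 < d0 ->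
  (forall h, h <> 0 -> Rabs h < d0 ->
     cnorm (Cadd (Cadd (g (z + h)) (Copp (g z))) (Copp (Cmul (RtoC h) l))) <= C * (h * h)) ->
  cder g z l.
Proof.
  intros HC Hd Hb.
  split; apply derivable_pt_lim_quadratic with C d0; auto; intros h H1 H2;
    apply Rle_trans with (2 := Hb h H1 H2).
  - eapply Rle_trans; [|apply Rabs_re_le_cnorm]. simpl; right; f_equal; ring.
  - eapply Rle_trans; [|apply Rabs_im_le_cnorm]. simpl; right; f_equal; ring.
Qed.

(* The remainder is quadratic in [h] by [Mexp_rem_bound]. *)
Lemma Mexp_derive_dir n (Af : R -> Mat) (P : Mat) z :
  (forall h, Af (z + h) = Madd (Af z) (Mscale (RtoC h) P)) -> Mcomm n P (Af z) ->
  mder n n (fun y => Mexp n (Af y)) z (Mmul n P (Mexp n (Af z))).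
Proof.
  intros HA Hc i j Hi Hj.
  destruct (row_bound_exists n (Af z)) as [a [Ha0 Ha]].
  destruct (row_bound_exists n P) as [p [Hp0 Hp]].
  apply cder_quadratic with (C := p * p * exp (4 * (a + 1))) (d0 := / (p + 1)).
  - pose proof (exp_pos (4 * (a + 1))). apply Rmult_le_pos; nra.
  - apply Rinv_0_lt_compat; lra.
  - intros h Hh0 Hh. rewrite HA. pose proof (Rabs_pos h).
    assert (Hhp : Rabs h * p <= 1).
    { apply Rmult_lt_compat_r with (r := p + 1) in Hh; [|lra].
      rewrite Rinv_l in Hh by lra. nra. }
    assert (Hcm : Mcomm n (Mscale (RtoC h) P) (Af z))
      by (apply Mcomm_sym, Mcomm_scaler, Mcomm_sym; auto).
    assert (Hr : row_bound n (Mscale (RtoC h) P) (Rabs h * p))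
      by (rewrite <- cnorm_RtoC; apply row_bound_scale; auto).
    pose proof (Mexp_rem_bound n (Af z) (Mscale (RtoC h) P) a (Rabs h * p) Ha Hr Ha0
                  ltac:(nra) Hhp Hcm i j Hi Hj) as B.
    rewrite Mmul_scalel in B. unfold Mscale at 2 in B.
    eapply Rle_trans; [apply B|]. right.
    replace (h * h) with (Rabs h * Rabs h) by (rewrite <- Rabs_mult; apply Rabs_pos_eq, Rle_0_sqr).
    ring.
Qed.

Lemma Mexp_continuous n A e : 0 < e -> exists d, 0 < d /\
  forall H h, row_bound n H h -> 0 <= h -> h < d ->
  forall i j, (i < n)%nat -> (j < n)%nat ->
    cnorm (Cadd (Mexp n (Madd A H) i j) (Copp (Mexp n A i j))) < e.
Proof.
  intros He. destruct (row_bound_exists n A) as [a [Ha0 Ha]].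
  set (E := exp (2 * (a + 1))). assert (HE : 0 < E) by apply exp_pos.
  exists (Rmin 1 (e / E)). split; [apply Rmin_pos; [lra|apply Rdiv_lt_0_compat; auto]|].
  intros H h Hh Hh0 Hhd i j Hi Hj.
  pose proof (Rmin_l 1 (e / E)). pose proof (Rmin_r 1 (e / E)).
  eapply Rle_lt_trans; [apply (Mexp_diff_bound n A H a h); auto; lra|].
  apply Rlt_le_trans with (e / E * E); [apply Rmult_lt_compat_r; lra|].
  right; field; lra.
Qed.

Section Xi.
Variables (n : nat) (S : Mat).

Definition Xi_exponent x t := Madd (Mscale (RtoC (-2 * x)) S) (Mscale (RtoC (-2 * t)) (Mpow n S 3)).

Lemma Xi_exponent_shift x t x' t' :
  Xi_exponent x' t' = Madd (Xi_exponent x t)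
    (Madd (Mscale (RtoC (x' - x)) (Mscale (RtoC (-2)) S))
          (Mscale (RtoC (t' - t)) (Mscale (RtoC (-2)) (Mpow n S 3)))).
Proof. unfold Xi_exponent; mat_ext; unfold Madd, Mscale; apply Cplx_ext; simpl; ring. Qed.

Lemma Xi_exponent_shift_x x t h :
  Xi_exponent (x + h) t = Madd (Xi_exponent x t) (Mscale (RtoC h) (Mscale (RtoC (-2)) S)).
Proof. unfold Xi_exponent; mat_ext; unfold Madd, Mscale; apply Cplx_ext; simpl; ring. Qed.

Lemma Xi_exponent_shift_t x t h :
  Xi_exponent x (t + h) = Madd (Xi_exponent x t) (Mscale (RtoC h) (Mscale (RtoC (-2)) (Mpow n S 3))).
Proof. unfold Xi_exponent; mat_ext; unfold Madd, Mscale; apply Cplx_ext; simpl; ring. Qed.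

Lemma Mcomm_S_Xi_exponent x t : Mcomm n S (Xi_exponent x t).
Proof.
  apply Mcomm_addr; apply Mcomm_scaler; [apply Mcomm_refl|apply Mcomm_powr, Mcomm_refl].
Qed.

Lemma Mcomm_S3_Xi_exponent x t : Mcomm n (Mpow n S 3) (Xi_exponent x t).
Proof.
  apply Mcomm_addr; apply Mcomm_scaler; [apply Mcomm_sym, Mcomm_powr, Mcomm_refl|apply Mcomm_refl].
Qed.

Lemma Mcomm_S_Xi x t : Mcomm n S (Xi n S x t).
Proof. apply Mcomm_Mexp, Mcomm_S_Xi_exponent. Qed.

Lemma Xi_dx x t : mder n n (fun y => Xi n S y t) x (Mmul n (Mscale (RtoC (-2)) S) (Xi n S x t)).
Proof.
  apply (Mexp_derive_dir n (fun y => Xi_exponent y t)); [intros; apply Xi_exponent_shift_x|].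
  apply Mcomm_sym, Mcomm_scaler, Mcomm_sym, Mcomm_S_Xi_exponent.
Qed.

Lemma Xi_dt x t :
  mder n n (fun s => Xi n S x s) t (Mmul n (Mscale (RtoC (-2)) (Mpow n S 3)) (Xi n S x t)).
Proof.
  apply (Mexp_derive_dir n (fun s => Xi_exponent x s)); [intros; apply Xi_exponent_shift_t|].
  apply Mcomm_sym, Mcomm_scaler, Mcomm_sym, Mcomm_S3_Xi_exponent.
Qed.

Lemma Xi_continuous x t e : 0 < e -> exists d, 0 < d /\
  forall x' t', Rabs (x' - x) < d -> Rabs (t' - t) < d ->
  forall i j, (i < n)%nat -> (j < n)%nat -> cnorm (Cadd (Xi n S x' t' i j) (Copp (Xi n S x t i j))) < e.
Proof.
  intros He. destruct (Mexp_continuous n (Xi_exponent x t) e He) as [d0 [Hd0 Hcont]].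
  destruct (row_bound_exists n (Mscale (RtoC (-2)) S)) as [p [Hp0 Hp]].
  destruct (row_bound_exists n (Mscale (RtoC (-2)) (Mpow n S 3))) as [q [Hq0 Hq]].
  exists (d0 / (p + q + 1)). split; [apply Rdiv_lt_0_compat; lra|].
  intros x' t' Hx Ht i j Hi Hj.
  assert (Hdq : d0 / (p + q + 1) * (p + q + 1) = d0) by (field; lra).
  pose proof (Rabs_pos (x' - x)). pose proof (Rabs_pos (t' - t)).
  change (Xi n S x' t') with (Mexp n (Xi_exponent x' t')).
  rewrite (Xi_exponent_shift x t x' t').
  apply Hcont with (Rabs (x' - x) * p + Rabs (t' - t) * q); auto; [|nra|nra].
  apply row_bound_add; rewrite <- cnorm_RtoC; apply row_bound_scale; auto.
Qed.
End Xi.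

(** * Inverse matrices *)

Lemma Minv_spec n M : Minvertible n M ->
  Meq n n (Mmul n M (Minv n M)) Mid /\ Meq n n (Mmul n (Minv n M) M) Mid.
Proof. intros H. unfold Minv. apply epsilon_spec. exact H. Qed.

Lemma Minv_unique n M B : Minvertible n M ->
  Meq n n (Mmul n M B) Mid -> Meq n n (Mmul n B M) Mid -> Meq n n (Minv n M) B.
Proof.
  intros HM H1 H2. destruct (Minv_spec n M HM) as [H3 H4].
  eapply Meq_trans; [apply Meq_sym, Mmul_Mid_r|].
  eapply Meq_trans; [apply Meq_Mmul_r, Meq_sym, H1|].
  rewrite <- Mmul_assoc. eapply Meq_trans; [apply Meq_Mmul_l, H4|]. apply Mmul_Mid_l.
Qed.

Lemma geom_Rsum_le f K : 0 <= f < 1 -> Rsum (fun k => f ^ k) K <= / (1 - f).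
Proof.
  intros Hf. assert (E : Rsum (fun k => f ^ k) K * (1 - f) = 1 - f ^ K).
  { induction K; simpl; [|rewrite Rmult_plus_distr_r, IHK]; ring. }
  assert (0 <= f ^ K) by (apply pow_le; lra).
  apply Rmult_le_reg_r with (1 - f); [lra|]. rewrite E, Rinv_l by lra. lra.
Qed.

Section Neumann.
Variables (n : nat) (G : Mat) (f : R).
Hypothesis HG : row_bound n G f.
Hypothesis Hf : 0 <= f <= / 2.

Let geom_partial K : Mat := fun i j => Csum (fun k => Mpow n G k i j) (S K).

Lemma geom_partial_mul_l K i j : (i < n)%nat -> (j < n)%nat ->
  Mmul n (Msub Mid G) (geom_partial K) i j = Cadd (Mid i j) (Copp (Mpow n G (S K) i j)).
Proof.
  intros Hi Hj. unfold Mmul at 1, geom_partial.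
  transitivity (Csum (fun k => Mmul n (Msub Mid G) (Mpow n G k) i j) (S K)).
  { unfold Mmul. rewrite <- Csum_swap. apply Csum_ext; intros. symmetry; apply Csum_mull. }
  rewrite (Csum_ext _ (fun k => Cadd (Mpow n G k i j) (Copp (Mpow n G (S k) i j)))), Csum_telescope; auto.
  intros k _. rewrite Mmul_subl. unfold Msub.
  rewrite (Mmul_Mid_l n n _ i j Hi Hj), (Mcomm_powr n G G k (Mcomm_refl n G) i j Hi Hj). auto.
Qed.

Lemma geom_partial_mul_r K i j : (i < n)%nat -> (j < n)%nat ->
  Mmul n (geom_partial K) (Msub Mid G) i j = Cadd (Mid i j) (Copp (Mpow n G (S K) i j)).
Proof.
  intros Hi Hj. unfold Mmul at 1, geom_partial.
  transitivity (Csum (fun k => Mmul n (Mpow n G k) (Msub Mid G) i j) (S K)).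
  { unfold Mmul. rewrite <- Csum_swap. apply Csum_ext; intros. symmetry; apply Csum_mulr. }
  rewrite (Csum_ext _ (fun k => Cadd (Mpow n G k i j) (Copp (Mpow n G (S k) i j)))), Csum_telescope; auto.
  intros k _. rewrite Mmul_subr. unfold Msub. rewrite (Mmul_Mid_r n n _ i j Hi Hj). auto.
Qed.

Lemma Mpow_entry_le k i j : (i < n)%nat -> (j < n)%nat -> cnorm (Mpow n G k i j) <= f ^ k.
Proof. intros Hi Hj. apply row_bound_entry with n; auto. apply row_bound_pow; auto; lra. Qed.

Lemma Mpow_cv_0 i j : (i < n)%nat -> (j < n)%nat -> Ccv (fun K => Mpow n G (S K) i j) C0.
Proof.
  intros Hi Hj. apply Ccv_zero_of_bound with (r := fun K => f ^ S K).
  - intros K. apply Mpow_entry_le; auto.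
  - intros e He. destruct (pow_lt_1_zero f ltac:(rewrite Rabs_right; lra) e He) as [N HN].
    exists N. intros k Hk. unfold Rdist. rewrite Rminus_0_r. apply HN. lia.
Qed.

Lemma geom_partial_dist_le K i j : (i < n)%nat -> (j < n)%nat ->
  cnorm (Cadd (geom_partial K i j) (Copp (Mid i j))) <= 2 * f.
Proof.
  intros Hi Hj. unfold geom_partial. rewrite Csum_shift. simpl (Mpow n G 0).
  replace (Cadd (Cadd (Mid i j) _) (Copp (Mid i j))) with (Csum (fun k => Mpow n G (S k) i j) K) by ring.
  eapply Rle_trans; [apply cnorm_Csum|].
  apply Rle_trans with (Rsum (fun k => f * f ^ k) K).
  { apply Rsum_le. intros k _. apply Mpow_entry_le; auto. }
  rewrite Rsum_mull. assert (Hg := geom_Rsum_le f K ltac:(lra)).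
  assert (/ (1 - f) <= 2) by (apply Rmult_le_reg_r with (1 - f); [lra|rewrite Rinv_l by lra; lra]).
  apply Rmult_le_compat_l with (r := f) in Hg; [|lra].
  change (Rsum (pow f) K) with (Rsum (fun k => f ^ k) K). nra.
Qed.

Lemma neumann : exists N : Mat,
  Meq n n (Mmul n (Msub Mid G) N) Mid /\ Meq n n (Mmul n N (Msub Mid G)) Mid /\
  forall i j, (i < n)%nat -> (j < n)%nat -> cnorm (Cadd (N i j) (Copp (Mid i j))) <= 2 * f.
Proof.
  destruct (Mseries_cv n (fun k => Mpow n G k) (fun k => 1 * f ^ k) (/ (1 - f))) as [L HL].
  { intros k i j Hi Hj. rewrite Rmult_1_l. apply Mpow_entry_le; auto. }
  { apply GP_infinite. rewrite Rabs_right; lra. }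
  assert (Htail : forall i j, (i < n)%nat -> (j < n)%nat ->
            Ccv (fun K => Cadd (Mid i j) (Copp (Mpow n G (S K) i j))) (Mid i j)).
  { intros i j Hi Hj.
    assert (Hc : Ccv (fun K => Cadd (Mid i j) (Copp (Mpow n G (S K) i j))) (Cadd (Mid i j) (Copp C0)))
      by (apply Ccv_add; [apply Ccv_const|apply Ccv_opp, Mpow_cv_0; auto]).
    replace (Cadd (Mid i j) (Copp C0)) with (Mid i j) in Hc by ring. exact Hc. }
  exists L. split; [|split]; intros i j Hi Hj.
  - apply (Ccv_unique (fun K => Mmul n (Msub Mid G) (geom_partial K) i j)).
    + apply Ccv_Mmul_l. intros k Hk. apply HL; auto.
    + eapply Ccv_ext; [|apply Htail; auto]. intros K. rewrite geom_partial_mul_l; auto.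
  - apply (Ccv_unique (fun K => Mmul n (geom_partial K) (Msub Mid G) i j)).
    + apply Ccv_Mmul_r. intros k Hk. apply HL; auto.
    + eapply Ccv_ext; [|apply Htail; auto]. intros K. rewrite geom_partial_mul_r; auto.
  - apply (Ccv_norm_le (fun K => Cadd (geom_partial K i j) (Copp (Mid i j)))).
    + apply Ccv_add, Ccv_opp; [apply HL; auto|apply Ccv_const].
    + intros K. apply geom_partial_dist_le; auto.
Qed.
End Neumann.

(* [B' = (I - G)^-1 B] with [G = B (M0 - M')], since [M' = M0 (I - G)]. *)
Lemma Minv_perturb n M0 M' B f beta :
  Meq n n (Mmul n M0 B) Mid -> Meq n n (Mmul n B M0) Mid ->
  row_bound n B beta -> 0 <= beta ->
  row_bound n (Mmul n B (Msub M0 M')) f -> 0 <= f <= / 2 ->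
  exists B', Meq n n (Mmul n M' B') Mid /\ Meq n n (Mmul n B' M') Mid /\
    forall i j, (i < n)%nat -> (j < n)%nat ->
      cnorm (Cadd (B' i j) (Copp (B i j))) <= INR n * (2 * f) * beta.
Proof.
  intros H1 H2 HB Hb HG Hf.
  set (G := Mmul n B (Msub M0 M')).
  destruct (neumann n G f HG Hf) as [N [N1 [N2 N3]]].
  assert (HM' : Meq n n (Mmul n M0 (Msub Mid G)) M').
  { unfold G. rewrite Mmul_subr, <- Mmul_assoc.
    eapply Meq_trans; [apply Meq_Msub; [apply Mmul_Mid_r|apply Meq_Mmul_l, H1]|].
    eapply Meq_trans; [apply Meq_Msub; [apply Meq_refl|apply Mmul_Mid_l]|].
    apply Meq_eq. mat_ext. unfold Msub. ring. }
  assert (HBM' : Meq n n (Mmul n B M') (Msub Mid G)).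
  { unfold G. rewrite Mmul_subr. eapply Meq_trans; [|apply Meq_Msub; [apply H2|apply Meq_refl]].
    apply Meq_eq. mat_ext. unfold Msub. ring. }
  exists (Mmul n N B). split; [|split].
  - eapply Meq_trans; [apply Meq_Mmul_l, Meq_sym, HM'|]. rewrite !Mmul_assoc.
    eapply Meq_trans; [apply Meq_Mmul_r; rewrite <- Mmul_assoc; apply Meq_Mmul_l, N1|].
    eapply Meq_trans; [apply Meq_Mmul_r, Mmul_Mid_l|]. auto.
  - rewrite Mmul_assoc. eapply Meq_trans; [apply Meq_Mmul_r, HBM'|]. auto.
  - intros i j Hi Hj.
    replace (Cadd (Mmul n N B i j) (Copp (B i j))) with (Mmul n (Msub N Mid) B i j)
      by (rewrite Mmul_subl; unfold Msub; rewrite (Mmul_Mid_l n n B i j); auto).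
    unfold Mmul. eapply Rle_trans; [apply cnorm_Csum|].
    rewrite Rmult_assoc, <- Rsum_const. apply Rsum_le. intros k Hk. eapply Rle_trans; [apply cnorm_mul|].
    apply Rmult_le_compat; try apply cnorm_pos; [apply N3; auto|apply row_bound_entry with n; auto].
Qed.

Lemma Minv_continuous n M0 e : Minvertible n M0 -> 0 < e -> exists eta, 0 < eta /\
  forall M', (forall i j, (i < n)%nat -> (j < n)%nat -> cnorm (Cadd (M' i j) (Copp (M0 i j))) < eta) ->
  Minvertible n M' /\
  forall i j, (i < n)%nat -> (j < n)%nat -> cnorm (Cadd (Minv n M' i j) (Copp (Minv n M0 i j))) < e.
Proof.
  intros Hinv He. destruct (Minv_spec n M0 Hinv) as [H1 H2].
  destruct (row_bound_exists n (Minv n M0)) as [beta [Hbeta HB]].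
  set (c := (beta + 1) * (INR n + 1)).
  assert (Hc1 : 1 <= c) by (unfold c; pose proof (pos_INR n); nra).
  set (eta := Rmin (/ (2 * c)) (e / (4 * (c * c)))).
  assert (E1 : eta <= / (2 * c)) by apply Rmin_l.
  assert (E2 : eta <= e / (4 * (c * c))) by apply Rmin_r.
  assert (Heta : 0 < eta) by (apply Rmin_pos; [apply Rinv_0_lt_compat|apply Rdiv_lt_0_compat]; nra).
  exists eta. split; [exact Heta|]. intros M' HM'.
  assert (HD : row_bound n (Msub M0 M') (INR n * eta)).
  { apply row_bound_of_entry. intros i j Hi Hj. unfold Msub.
    rewrite <- cnorm_opp. replace (Copp _) with (Cadd (M' i j) (Copp (M0 i j))) by ring.
    left; auto. }
  set (f := beta * (INR n * eta)).
  pose proof (pos_INR n).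
  assert (Hfc : f <= c * eta)
    by (unfold f, c; assert (0 <= (beta + INR n + 1) * eta) by (apply Rmult_le_pos; lra); nra).
  assert (Hce : c * eta <= / 2).
  { apply Rmult_le_compat_l with (r := c) in E1; [|lra].
    replace (c * / (2 * c)) with (/ 2) in E1 by (field; lra). lra. }
  assert (Hf0 : 0 <= f) by (unfold f; apply Rmult_le_pos; [|apply Rmult_le_pos]; lra).
  destruct (Minv_perturb n M0 M' (Minv n M0) f beta H1 H2 HB Hbeta
              (row_bound_mul _ _ _ _ _ HB HD ltac:(nra)) ltac:(lra)) as [B' [K1 [K2 K3]]].
  assert (Hinv' : Minvertible n M') by (exists B'; auto).
  split; auto. intros i j Hi Hj.
  rewrite (Minv_unique n M' B' Hinv' K1 K2 i j Hi Hj).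
  eapply Rle_lt_trans; [apply K3; auto|].
  assert (Hnb : 0 <= INR n * beta <= c) by (unfold c; split; nra).
  assert (INR n * (2 * f) * beta <= 2 * eta * (c * c)).
  { unfold f. replace (INR n * (2 * (beta * (INR n * eta))) * beta)
      with (2 * eta * ((INR n * beta) * (INR n * beta))) by ring.
    apply Rmult_le_compat_l; [lra|]. apply Rmult_le_compat; lra. }
  apply Rmult_le_compat_l with (r := 2 * (c * c)) in E2; [|nra].
  replace (2 * (c * c) * (e / (4 * (c * c)))) with (e / 2) in E2 by (field; nra).
  lra.
Qed.

Definition Clim0 (q : R -> Cplx) (L : Cplx) : Prop :=
  forall e, 0 < e -> exists d, 0 < d /\
    forall h, h <> 0 -> Rabs h < d -> cnorm (Cadd (q h) (Copp L)) < e.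

Lemma Clim0_const c : Clim0 (fun _ => c) c.
Proof.
  intros e He; exists 1; split; [lra|]; intros.
  replace (Cadd c (Copp c)) with C0 by ring. rewrite cnorm_C0; lra.
Qed.

Lemma Clim0_add q1 q2 L1 L2 :
  Clim0 q1 L1 -> Clim0 q2 L2 -> Clim0 (fun h => Cadd (q1 h) (q2 h)) (Cadd L1 L2).
Proof.
  intros H1 H2 e He.
  destruct (H1 (e / 2) ltac:(lra)) as [d1 [Hd1 K1]]. destruct (H2 (e / 2) ltac:(lra)) as [d2 [Hd2 K2]].
  exists (Rmin d1 d2); split; [apply Rmin_pos; auto|]. intros h Hh Hd.
  pose proof (Rmin_l d1 d2); pose proof (Rmin_r d1 d2).
  specialize (K1 h Hh ltac:(lra)); specialize (K2 h Hh ltac:(lra)).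
  replace (Cadd (Cadd (q1 h) (q2 h)) (Copp (Cadd L1 L2)))
    with (Cadd (Cadd (q1 h) (Copp L1)) (Cadd (q2 h) (Copp L2))) by ring.
  eapply Rle_lt_trans; [apply cnorm_add|]. lra.
Qed.

Lemma Clim0_opp q L : Clim0 q L -> Clim0 (fun h => Copp (q h)) (Copp L).
Proof.
  intros H e He. destruct (H e He) as [d [Hd K]]. exists d; split; auto. intros h Hh Hd'.
  replace (Cadd (Copp (q h)) (Copp (Copp L))) with (Copp (Cadd (q h) (Copp L))) by ring.
  rewrite cnorm_opp; auto.
Qed.

Lemma Clim0_mul q1 q2 L1 L2 :
  Clim0 q1 L1 -> Clim0 q2 L2 -> Clim0 (fun h => Cmul (q1 h) (q2 h)) (Cmul L1 L2).
Proof.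
  intros H1 H2 e He.
  set (c := cnorm L1 + cnorm L2 + 1).
  pose proof (cnorm_pos L1). pose proof (cnorm_pos L2).
  set (eta := Rmin 1 (e / (2 * c))).
  assert (E1 : eta <= 1) by apply Rmin_l. assert (E2 : eta <= e / (2 * c)) by apply Rmin_r.
  assert (Heta : 0 < eta) by (apply Rmin_pos; [lra|apply Rdiv_lt_0_compat; unfold c; lra]).
  destruct (H1 eta Heta) as [d1 [Hd1 K1]]. destruct (H2 eta Heta) as [d2 [Hd2 K2]].
  exists (Rmin d1 d2); split; [apply Rmin_pos; auto|]. intros h Hh Hd.
  pose proof (Rmin_l d1 d2); pose proof (Rmin_r d1 d2).
  specialize (K1 h Hh ltac:(lra)); specialize (K2 h Hh ltac:(lra)).
  set (a1 := Cadd (q1 h) (Copp L1)) in *. set (a2 := Cadd (q2 h) (Copp L2)) in *.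
  replace (Cadd (Cmul (q1 h) (q2 h)) (Copp (Cmul L1 L2)))
    with (Cadd (Cadd (Cmul a1 a2) (Cmul a1 L2)) (Cmul L1 a2)) by (unfold a1, a2; ring).
  eapply Rle_lt_trans; [apply cnorm_add|].
  eapply Rle_lt_trans; [apply Rplus_le_compat_r, cnorm_add|].
  pose proof (cnorm_mul a1 a2). pose proof (cnorm_mul a1 L2). pose proof (cnorm_mul L1 a2).
  pose proof (cnorm_pos a1). pose proof (cnorm_pos a2).
  assert (eta * c <= e / 2).
  { apply Rmult_le_compat_r with (r := c) in E2; [|unfold c; lra].
    replace (e / (2 * c) * c) with (e / 2) in E2 by (field; unfold c; lra). lra. }
  assert (cnorm a1 * cnorm a2 <= eta) by nra.
  assert (cnorm a1 * cnorm L2 <= eta * cnorm L2) by nra.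
  assert (cnorm L1 * cnorm a2 <= cnorm L1 * eta) by nra.
  unfold c in *. nra.
Qed.

Lemma Clim0_sum (q : nat -> R -> Cplx) (L : nat -> Cplx) p :
  (forall k, (k < p)%nat -> Clim0 (q k) (L k)) -> Clim0 (fun h => Csum (fun k => q k h) p) (Csum L p).
Proof. induction p; intros H; simpl; [apply Clim0_const|apply Clim0_add; auto]. Qed.

Lemma Clim0_near q q' L d0 :
  0 < d0 -> (forall h, h <> 0 -> Rabs h < d0 -> q h = q' h) -> Clim0 q L -> Clim0 q' L.
Proof.
  intros Hd0 E H e He. destruct (H e He) as [d [Hd K]].
  exists (Rmin d d0); split; [apply Rmin_pos; auto|].
  intros h Hh Hd'. pose proof (Rmin_l d d0); pose proof (Rmin_r d d0).
  rewrite <- E by (auto; lra). apply K; auto; lra.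
Qed.

Definition diff_quot (g : R -> Cplx) z h := Cmul (RtoC (/ h)) (Cadd (g (z + h)) (Copp (g z))).

Lemma Clim0_diff_quot g z l : cder g z l -> Clim0 (diff_quot g z) l.
Proof.
  intros [H1 H2] e He.
  destruct (H1 (e / 2) ltac:(lra)) as [d1 K1]. destruct (H2 (e / 2) ltac:(lra)) as [d2 K2].
  exists (Rmin d1 d2); split; [apply Rmin_pos; apply cond_pos|]. intros h Hh Hd.
  pose proof (Rmin_l d1 d2); pose proof (Rmin_r d1 d2).
  specialize (K1 h Hh ltac:(lra)); specialize (K2 h Hh ltac:(lra)).
  unfold cnorm, diff_quot; simpl. rewrite !Rmult_0_l.
  replace (/ h * (re (g (z + h)) + - re (g z)) - 0 + - re l)
    with ((re (g (z + h)) - re (g z)) / h - re l) by (field; auto).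
  replace (/ h * (im (g (z + h)) + - im (g z)) + 0 + - im l)
    with ((im (g (z + h)) - im (g z)) / h - im l) by (field; auto).
  lra.
Qed.

Lemma cder_Clim0 g z l : Clim0 (diff_quot g z) l -> cder g z l.
Proof.
  intros H. split; intros e He; destruct (H e He) as [d [Hd K]]; exists (mkposreal d Hd); simpl;
    intros h Hh Hd'; specialize (K h Hh Hd'); apply Rle_lt_trans with (2 := K);
    unfold cnorm, diff_quot; simpl; rewrite !Rmult_0_l.
  - replace ((re (g (z + h)) - re (g z)) / h - re l)
      with (/ h * (re (g (z + h)) + - re (g z)) - 0 + - re l) by (field; auto).
    pose proof (Rabs_pos (/ h * (im (g (z + h)) + - im (g z)) + 0 + - im l)). lra.
  - replace ((im (g (z + h)) - im (g z)) / h - im l)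
      with (/ h * (im (g (z + h)) + - im (g z)) + 0 + - im l) by (field; auto).
    pose proof (Rabs_pos (/ h * (re (g (z + h)) + - re (g z)) - 0 + - re l)). lra.
Qed.

Lemma Minv_diff n M M' : Minvertible n M -> Minvertible n M' ->
  Meq n n (Msub (Minv n M') (Minv n M))
          (Mscale (RtoC (-1)) (Mmul n (Minv n M') (Mmul n (Msub M' M) (Minv n M)))).
Proof.
  intros HM HM'. destruct (Minv_spec n _ HM) as [A1 A2]. destruct (Minv_spec n _ HM') as [B1 B2].
  rewrite Mmul_subl, Mmul_subr, <- Mmul_assoc.
  intros i j Hi Hj. unfold Msub, Mscale.
  rewrite (Meq_Mmul_l n n n _ _ (Minv n M) B2 i j Hi Hj), (Mmul_Mid_l n n _ i j Hi Hj).
  rewrite (Meq_Mmul_r n n n (Minv n M') _ _ A1 i j Hi Hj), (Mmul_Mid_r n n _ i j Hi Hj).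
  apply Cplx_ext; simpl; ring.
Qed.

Lemma Minv_derive n (Mf : R -> Mat) z L :
  mder n n Mf z L ->
  (forall e, 0 < e -> exists d, 0 < d /\ forall h, Rabs h < d ->
     Minvertible n (Mf (z + h)) /\
     forall i j, (i < n)%nat -> (j < n)%nat ->
       cnorm (Cadd (Minv n (Mf (z + h)) i j) (Copp (Minv n (Mf z) i j))) < e) ->
  mder n n (fun y => Minv n (Mf y)) z
    (Mscale (RtoC (-1)) (Mmul n (Minv n (Mf z)) (Mmul n L (Minv n (Mf z))))).
Proof.
  intros HD Hc i j Hi Hj. apply cder_Clim0.
  destruct (Hc 1 ltac:(lra)) as [d0 [Hd0 K0]].
  assert (Hinv0 : Minvertible n (Mf z))
    by (destruct (K0 0 ltac:(rewrite Rabs_R0; lra)) as [HH _]; rewrite Rplus_0_r in HH; auto).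
  set (W := Minv n (Mf z)).
  apply Clim0_near with (d0 := d0) (q := fun h => Copp (Csum (fun k =>
    Cmul (Minv n (Mf (z + h)) i k) (Csum (fun l => Cmul (diff_quot (fun y => Mf y k l) z h) (W l j)) n)) n));
    auto.
  - intros h Hh Hd. destruct (K0 h Hd) as [Hinvh _].
    pose proof (Minv_diff n _ _ Hinv0 Hinvh i j Hi Hj) as E. fold W in E.
    unfold Msub at 1 in E. unfold diff_quot at 2. cbv beta. fold W. rewrite E.
    unfold Mscale, Mmul, diff_quot, Msub.
    rewrite <- Csum_opp, <- !Csum_mull. apply Csum_ext. intros k _.
    rewrite (Csum_ext _ (fun l => Cmul (RtoC (/ h))
               (Cmul (Cadd (Mf (z + h) k l) (Copp (Mf z k l))) (W l j)))) by (intros; ring).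
    rewrite Csum_mull. apply Cplx_ext; simpl; ring.
  - unfold Mscale, Mmul.
    replace (Cmul (RtoC (-1)) _) with
      (Copp (Csum (fun k => Cmul (W i k) (Csum (fun l => Cmul (L k l) (W l j)) n)) n))
      by (apply Cplx_ext; simpl; ring).
    apply Clim0_opp, Clim0_sum. intros k Hk. apply Clim0_mul.
    + intros e He. destruct (Hc e He) as [d [Hd K]]. exists d; split; auto.
      intros h _ Hd'. apply K; auto.
    + apply Clim0_sum. intros l Hl. apply Clim0_mul; [|apply Clim0_const].
      apply Clim0_diff_quot, HD; auto.
Qed.

(** * Algebra of [G = Xi (I - K Xi)^-1] *)

Lemma RtoC_1 : RtoC 1 = Defs.C1.
Proof. reflexivity. Qed.

Lemma RtoC_m1 : RtoC (-1) = Copp Defs.C1.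
Proof. apply Cplx_ext; simpl; ring. Qed.

Lemma RtoC_m2 : RtoC (-2) = Copp (Cadd Defs.C1 Defs.C1).
Proof. apply Cplx_ext; simpl; ring. Qed.

Ltac mat_distr :=
  repeat first [rewrite Mmul_addl | rewrite Mmul_addr | rewrite Mmul_subl | rewrite Mmul_subr
               | rewrite Mmul_scalel | rewrite Mmul_scaler | rewrite Mmul_assoc
               | rewrite Mmul_zerol | rewrite Mmul_zeror].

(* Proves [Meq r c A B] when [A] and [B] are equal as noncommutative polynomials in their
   matrix atoms; products with [Mid] are not simplified. *)
Ltac mat_ring :=
  match goal with |- Meq _ _ ?A ?B =>
    replace A with B; [apply Meq_refl|];
    mat_distr; mat_ext; unfold Madd, Msub, Mscale, Mzero; rewrite ?RtoC_m2, ?RtoC_m1, ?RtoC_1; ring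
  end.

Section ResolventAlgebra.
Variables (n : nat) (K X W : Mat).
Let M := Msub Mid (Mmul n K X).
Hypothesis HW1 : Meq n n (Mmul n M W) Mid.
Hypothesis HW2 : Meq n n (Mmul n W M) Mid.
Let G := Mmul n X W.

Lemma resolvent_mul_r : Meq n n (Mmul n G M) X.
Proof. unfold G. rewrite Mmul_assoc. eapply Meq_trans; [apply Meq_Mmul_r, HW2|apply Mmul_Mid_r]. Qed.

Lemma resolvent_cancel_r E : Meq n n (Mmul n E M) Mzero -> Meq n n E Mzero.
Proof.
  intros HE. eapply Meq_trans; [apply Meq_sym, Mmul_Mid_r|].
  eapply Meq_trans; [apply Meq_Mmul_r, Meq_sym, HW1|]. rewrite <- Mmul_assoc.
  eapply Meq_trans; [apply Meq_Mmul_l, HE|]. rewrite Mmul_zerol. apply Meq_refl.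
Qed.

(* Multiply by [M] on the right and use [G M = X], [G = X + G K X] and [C X = X C]. *)
Lemma resolvent_commutator C : Mcomm n C X ->
  Meq n n (Msub (Mmul n G C) (Mmul n C G)) (Mmul n G (Mmul n (Msub (Mmul n K C) (Mmul n C K)) G)).
Proof.
  intros HC. apply Meq_Msub_zero, resolvent_cancel_r.
  pose proof resolvent_mul_r as HG.
  assert (HG' : Meq n n (Msub G (Mmul n G (Mmul n K X))) X).
  { eapply Meq_trans; [|exact HG]. unfold M. rewrite Mmul_subr.
    apply Meq_Msub; [apply Meq_sym, Mmul_Mid_r|apply Meq_refl]. }
  apply Meq_trans with
    (Madd (Msub (Msub (Mmul n G (Mmul n C M)) (Mmul n C (Mmul n G M)))
                (Mmul n G (Mmul n K (Mmul n C (Mmul n G M)))))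
          (Mmul n G (Mmul n C (Mmul n K (Mmul n G M))))).
  { mat_ring. }
  apply Meq_trans with
    (Madd (Msub (Msub (Mmul n G (Mmul n C M)) (Mmul n C X)) (Mmul n G (Mmul n K (Mmul n C X))))
          (Mmul n G (Mmul n C (Mmul n K X)))).
  { apply Meq_Madd; [apply Meq_Msub; [apply Meq_Msub|]|]; try apply Meq_refl;
      repeat apply Meq_Mmul_r; exact HG. }
  apply Meq_trans with
    (Madd (Msub (Msub (Msub (Mmul n G C) (Mmul n G (Mmul n C (Mmul n K X)))) (Mmul n C X))
                (Mmul n G (Mmul n K (Mmul n C X))))
          (Mmul n G (Mmul n C (Mmul n K X)))).
  { apply Meq_Madd; [apply Meq_Msub; [apply Meq_Msub|]|]; try apply Meq_refl.
    unfold M. rewrite !Mmul_subr. apply Meq_Msub; [apply Meq_Mmul_r, Mmul_Mid_r|apply Meq_refl]. }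
  apply Meq_trans with (Msub (Msub (Mmul n G C) (Mmul n C X)) (Mmul n G (Mmul n K (Mmul n C X)))).
  { mat_ring. }
  apply Meq_trans with (Msub (Msub (Mmul n G C) (Mmul n X C)) (Mmul n G (Mmul n K (Mmul n X C)))).
  { apply Meq_Msub; [apply Meq_Msub|]; try apply Meq_refl; repeat apply Meq_Mmul_r; exact HC. }
  apply Meq_trans with (Mmul n (Msub (Msub G (Mmul n G (Mmul n K X))) X) C).
  { mat_ring. }
  apply Meq_trans with (Mmul n (Msub X X) C).
  { apply Meq_Mmul_l, Meq_Msub; [exact HG'|apply Meq_refl]. }
  mat_ring.
Qed.

(* The product rule for [(X W)'] with [X' = -2 C X], [W' = - W M' W] and [M' = DM = - K X']. *)
Lemma resolvent_derive C DM : Mcomm n C X ->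
  Meq n n DM (Msub Mzero (Mmul n K (Mmul n (Mscale (RtoC (-2)) C) X))) ->
  Meq n n (Madd (Mmul n (Mmul n (Mscale (RtoC (-2)) C) X) W)
                (Mmul n X (Mscale (RtoC (-1)) (Mmul n W (Mmul n DM W)))))
          (Mscale (RtoC (-1)) (Madd (Madd (Mmul n G C) (Mmul n C G))
                                    (Mmul n G (Mmul n (Madd (Mmul n C K) (Mmul n K C)) G)))).
Proof.
  intros HC HDM.
  apply Meq_trans with (Madd (Mmul n (Mmul n (Mscale (RtoC (-2)) C) X) W)
    (Mmul n X (Mscale (RtoC (-1)) (Mmul n W
       (Mmul n (Msub Mzero (Mmul n K (Mmul n (Mscale (RtoC (-2)) C) X))) W))))).
  { apply Meq_Madd; [apply Meq_refl|]. apply Meq_Mmul_r, Meq_Mscale, Meq_Mmul_r, Meq_Mmul_l, HDM. }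
  set (T := Mscale (RtoC (-1)) (Madd (Madd (Mmul n G C) (Mmul n C G))
                                     (Mmul n G (Mmul n (Madd (Mmul n C K) (Mmul n K C)) G)))).
  set (B := Mmul n G (Mmul n (Msub (Mmul n K C) (Mmul n C K)) G)).
  apply Meq_trans with (Madd T (Msub (Msub (Mmul n G C) (Mmul n C G)) B)).
  { unfold T, B, G. mat_ring. }
  apply Meq_trans with (Madd T (Msub B B)).
  { apply Meq_Madd, Meq_Msub; [apply Meq_refl|apply resolvent_commutator; auto|apply Meq_refl]. }
  mat_ring.
Qed.
End ResolventAlgebra.

Lemma resolvent_mder n K (Xf : R -> Mat) z C :
  mder n n Xf z (Mmul n (Mscale (RtoC (-2)) C) (Xf z)) -> Mcomm n C (Xf z) ->
  Minvertible n (Msub Mid (Mmul n K (Xf z))) ->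
  (forall e, 0 < e -> exists d, 0 < d /\ forall h, Rabs h < d ->
     Minvertible n (Msub Mid (Mmul n K (Xf (z + h)))) /\
     forall i j, (i < n)%nat -> (j < n)%nat ->
       cnorm (Cadd (Minv n (Msub Mid (Mmul n K (Xf (z + h)))) i j)
                   (Copp (Minv n (Msub Mid (Mmul n K (Xf z))) i j))) < e) ->
  let G := Mmul n (Xf z) (Minv n (Msub Mid (Mmul n K (Xf z)))) in
  mder n n (fun y => Mmul n (Xf y) (Minv n (Msub Mid (Mmul n K (Xf y))))) z
    (Mscale (RtoC (-1)) (Madd (Madd (Mmul n G C) (Mmul n C G))
                              (Mmul n G (Mmul n (Madd (Mmul n C K) (Mmul n K C)) G)))).
Proof.
  intros HX HC Hinv Hnear G.
  assert (HM : mder n n (fun y => Msub Mid (Mmul n K (Xf y))) z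
                 (Msub Mzero (Madd (Mmul n Mzero (Xf z)) (Mmul n K (Mmul n (Mscale (RtoC (-2)) C) (Xf z))))))
    by (apply mder_sub; [apply mder_const|apply (mder_mul n n n (fun _ => K)); [apply mder_const|exact HX]]).
  eapply mder_Meq; [|apply (mder_mul n n n _ _ _ _ _ HX (Minv_derive n _ z _ HM Hnear))].
  destruct (Minv_spec n _ Hinv) as [H1 H2].
  apply (resolvent_derive n K (Xf z) _ H1 H2 C); auto.
  rewrite Mmul_zerol. mat_ring.
Qed.

(** * Noncommutative polynomials in [G], [S], [V], [U] *)

(* Block sizes: [sn] stands for [n], [sm] for [m]. *)
Inductive dim := sn | sm.
Inductive sym := sG | sS | sV | sU.

Definition dim_eq_dec (a b : dim) : {a = b} + {a <> b}.
Proof. decide equality. Defined.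

Definition sym_eq_dec (a b : sym) : {a = b} + {a <> b}.
Proof. decide equality. Defined.

Definition sym_rows a := match a with sU => sm | _ => sn end.
Definition sym_cols a := match a with sV => sm | _ => sn end.

Definition word := list sym.
Definition ncpoly := list (Z * word).

Fixpoint word_type (w : word) : option (dim * dim) :=
  match w with
  | [] => None
  | [a] => Some (sym_rows a, sym_cols a)
  | a :: w' =>
      match word_type w' with
      | Some (r, c) => if dim_eq_dec (sym_cols a) r then Some (sym_rows a, c) else None
      | None => None
      end
  end.

Definition poly_typed (r c : dim) (p : ncpoly) : bool :=
  forallb (fun cw => match word_type (snd cw) with
                     | Some (r', c') => if dim_eq_dec r r' then if dim_eq_dec c c' then true else false
                                        else false
                     | None => false end) p.

Definition map_words (f : word -> word) (q : ncpoly) : ncpoly := map (fun cw => (fst cw, f (snd cw))) q.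
Definition poly_scale (c : Z) (q : ncpoly) : ncpoly := map (fun cw => ((c * fst cw)%Z, snd cw)) q.
Definition poly_mul (p q : ncpoly) : ncpoly :=
  flat_map (fun cv => map (fun dw => ((fst cv * fst dw)%Z, snd cv ++ snd dw)) q) p.

(* Leibniz rule, with [dg] standing for the derivative of [G]. *)
Fixpoint word_deriv (dg : ncpoly) (w : word) : ncpoly :=
  match w with
  | [] => []
  | a :: w' => (if sym_eq_dec a sG then map_words (fun v => v ++ w') dg else [])
               ++ map_words (fun v => a :: v) (word_deriv dg w')
  end.

Definition poly_deriv (dg : ncpoly) (p : ncpoly) : ncpoly :=
  flat_map (fun cw => poly_scale (fst cw) (word_deriv dg (snd cw))) p.

Fixpoint insert_term (cw : Z * word) (acc : ncpoly) : ncpoly :=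
  match acc with
  | [] => [cw]
  | dv :: acc' => if list_eq_dec sym_eq_dec (snd cw) (snd dv)
                  then ((fst cw + fst dv)%Z, snd dv) :: acc'
                  else dv :: insert_term cw acc'
  end.

Definition collect (p : ncpoly) : ncpoly := fold_right insert_term [] p.
Definition poly_is_zero (p : ncpoly) : bool := forallb (fun cw => Z.eqb (fst cw) 0) p.

Lemma word_type_nonnil w r c : word_type w = Some (r, c) -> w <> [].
Proof. destruct w; simpl; congruence. Qed.

Lemma word_type_cons a w r c : w <> [] -> word_type (a :: w) = Some (r, c) ->
  r = sym_rows a /\ word_type w = Some (sym_cols a, c).
Proof.
  intros Hw. destruct w as [|b w]; [congruence|].
  change (word_type (a :: b :: w)) with
    (match word_type (b :: w) with
     | Some (r, c) => if dim_eq_dec (sym_cols a) r then Some (sym_rows a, c) else None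
     | None => None end).
  destruct (word_type (b :: w)) as [[r' c']|]; [|discriminate].
  destruct (dim_eq_dec (sym_cols a) r'); [|discriminate]. intros E; inversion E; subst; auto.
Qed.

Lemma word_type_last w r c : word_type w = Some (r, c) -> sym_cols (last w sG) = c.
Proof.
  revert r. induction w as [|a w IH]; intros r Hw; [discriminate|].
  destruct w as [|b w]; [simpl in *; congruence|].
  apply word_type_cons in Hw; [|congruence]. destruct Hw as [_ Hw]. apply (IH _ Hw).
Qed.

Lemma poly_typed_spec r c p : poly_typed r c p = true -> forall d w, In (d, w) p -> word_type w = Some (r, c).
Proof.
  unfold poly_typed. rewrite forallb_forall. intros H d w Hin. specialize (H _ Hin). simpl in H.
  destruct (word_type w) as [[r' c']|]; [|discriminate].
  destruct (dim_eq_dec r r'), (dim_eq_dec c c'); congruence.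
Qed.

Lemma in_map_words f q c v : In (c, v) (map_words f q) -> exists v', In (c, v') q /\ v = f v'.
Proof.
  induction q as [|[d u] q IH]; simpl; [tauto|]. intros [H|H].
  - inversion H; subst; eauto.
  - destruct (IH H) as [v' [H1 H2]]; eauto.
Qed.

Definition ends_in (d : dim) (p : ncpoly) : Prop :=
  forall c v, In (c, v) p -> v <> [] /\ sym_cols (last v sG) = d.

Definition nonempty_words (p : ncpoly) : Prop := forall c v, In (c, v) p -> v <> [].

Lemma poly_typed_ends_in r c p : poly_typed r c p = true -> ends_in c p.
Proof.
  intros H c0 v Hin. pose proof (poly_typed_spec r c p H c0 v Hin).
  split; [eapply word_type_nonnil|eapply word_type_last]; eauto.
Qed.

Lemma ends_in_tail d cw p : ends_in d (cw :: p) -> ends_in d p.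
Proof. intros H c v Hin. apply (H c v). right; auto. Qed.

Lemma nonempty_words_tail cw p : nonempty_words (cw :: p) -> nonempty_words p.
Proof. intros H c v Hin. apply (H c v). right; auto. Qed.

Lemma ends_in_nonempty d p : ends_in d p -> nonempty_words p.
Proof. intros H c v Hin. apply (H c v Hin). Qed.

Lemma word_deriv_nonempty dg w : nonempty_words dg -> nonempty_words (word_deriv dg w).
Proof.
  intros Hd. induction w as [|a w IH]; simpl; intros c v Hin; [tauto|].
  apply in_app_or in Hin; destruct Hin as [Hin|Hin].
  - destruct (sym_eq_dec a sG); [|contradiction].
    apply in_map_words in Hin. destruct Hin as [v' [H1 ->]].
    apply Hd in H1. destruct v'; simpl; congruence.
  - apply in_map_words in Hin. destruct Hin as [v' [_ ->]]; congruence.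
Qed.

Section Interpretation.
Variables (n m : nat) (S V U : Mat).

Definition dim_size d := match d with sn => n | sm => m end.
Definition sym_mat (g : Mat) a := match a with sG => g | sS => S | sV => V | sU => U end.

(* A word is the product of its letters, without a trailing identity factor. *)
Fixpoint word_mat (g : Mat) (w : word) : Mat :=
  match w with
  | [] => Mid
  | [a] => sym_mat g a
  | a :: w' => Mmul (dim_size (sym_cols a)) (sym_mat g a) (word_mat g w')
  end.

Fixpoint poly_mat (g : Mat) (p : ncpoly) : Mat :=
  match p with
  | [] => Mzero
  | (c, w) :: p' => Madd (Mscale (RtoC (IZR c)) (word_mat g w)) (poly_mat g p')
  end.

Lemma RtoC_IZR_mul c d : RtoC (IZR (c * d)%Z) = Cmul (RtoC (IZR c)) (RtoC (IZR d)).
Proof. apply Cplx_ext; simpl; [rewrite mult_IZR|]; ring. Qed.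

Lemma RtoC_IZR_add c d : RtoC (IZR (c + d)%Z) = Cadd (RtoC (IZR c)) (RtoC (IZR d)).
Proof. apply Cplx_ext; simpl; [rewrite plus_IZR|]; ring. Qed.

Lemma poly_mat_app g p q : poly_mat g (p ++ q) = Madd (poly_mat g p) (poly_mat g q).
Proof.
  induction p as [|[c w] p IH]; simpl.
  - mat_ext. unfold Madd, Mzero; ring.
  - rewrite IH, Madd_assoc; auto.
Qed.

Lemma poly_mat_scale g c q : poly_mat g (poly_scale c q) = Mscale (RtoC (IZR c)) (poly_mat g q).
Proof.
  induction q as [|[d v] q IH]; simpl; [rewrite Mscale_zero; auto|].
  rewrite IH, Mscale_Madd, Mscale_Mscale, RtoC_IZR_mul; auto.
Qed.

Lemma word_mat_cons g a w : w <> [] -> word_mat g (a :: w) = Mmul (dim_size (sym_cols a)) (sym_mat g a) (word_mat g w).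
Proof. destruct w; simpl; congruence. Qed.

Lemma word_mat_app g v w : v <> [] -> w <> [] ->
  word_mat g (v ++ w) = Mmul (dim_size (sym_cols (last v sG))) (word_mat g v) (word_mat g w).
Proof.
  induction v as [|a v IH]; intros Hv Hw; [congruence|].
  destruct v as [|b v]; [apply word_mat_cons; auto|].
  change ((a :: b :: v) ++ w) with (a :: ((b :: v) ++ w)).
  rewrite word_mat_cons, IH, (word_mat_cons g a (b :: v)), Mmul_assoc by (simpl; congruence).
  reflexivity.
Qed.

Lemma poly_mat_append g q w d : ends_in d q -> w <> [] ->
  poly_mat g (map_words (fun v => v ++ w) q) = Mmul (dim_size d) (poly_mat g q) (word_mat g w).
Proof.
  intros Hq Hw. induction q as [|[c v] q IH]; simpl; [rewrite Mmul_zerol; auto|].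
  rewrite Mmul_addl, Mmul_scalel, IH by (eapply ends_in_tail; eauto).
  destruct (Hq c v (or_introl eq_refl)) as [H1 H2]. rewrite word_mat_app, H2 by auto. auto.
Qed.

Lemma poly_mat_prepend g q w : nonempty_words q -> w <> [] ->
  poly_mat g (map_words (fun v => w ++ v) q) =
  Mmul (dim_size (sym_cols (last w sG))) (word_mat g w) (poly_mat g q).
Proof.
  intros Hq Hw. induction q as [|[c v] q IH]; simpl; [rewrite Mmul_zeror; auto|].
  rewrite Mmul_addr, Mmul_scaler, IH by (eapply nonempty_words_tail; eauto).
  rewrite word_mat_app by (auto; eapply Hq; left; eauto). auto.
Qed.

Lemma poly_mat_mul g p q d : ends_in d p -> nonempty_words q ->
  poly_mat g (poly_mul p q) = Mmul (dim_size d) (poly_mat g p) (poly_mat g q).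
Proof.
  intros Hp Hq. induction p as [|[c v] p IH]; simpl; [rewrite Mmul_zerol; auto|].
  rewrite poly_mat_app, Mmul_addl, IH by (eapply ends_in_tail; eauto).
  f_equal. rewrite Mmul_scalel. destruct (Hp c v (or_introl eq_refl)) as [Hv Hd].
  clear IH. induction q as [|[e w] q IHq]; simpl; [rewrite !Mmul_zeror, Mscale_zero; auto|].
  rewrite IHq by (eapply nonempty_words_tail; eauto).
  rewrite word_mat_app, Hd by (auto; eapply Hq; left; eauto).
  rewrite Mmul_addr, Mmul_scaler, Mscale_Madd, Mscale_Mscale, RtoC_IZR_mul. auto.
Qed.

Lemma insert_term_sound g cw acc : poly_mat g (insert_term cw acc) = Madd (poly_mat g [cw]) (poly_mat g acc).
Proof.
  destruct cw as [c w]. induction acc as [|[d v] acc IH]; simpl; [rewrite !Madd_zeror; auto|].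
  destruct (list_eq_dec sym_eq_dec w v) as [->|]; simpl.
  - rewrite RtoC_IZR_add. mat_ext. unfold Madd, Mscale, Mzero. ring.
  - rewrite IH. simpl. mat_ext. unfold Madd, Mscale, Mzero. ring.
Qed.

Lemma collect_sound g p : poly_mat g (collect p) = poly_mat g p.
Proof.
  induction p as [|[c w] p IH]; simpl; auto.
  rewrite insert_term_sound, IH. simpl. rewrite Madd_zeror; auto.
Qed.

Lemma poly_is_zero_sound g p : poly_is_zero p = true -> poly_mat g p = Mzero.
Proof.
  induction p as [|[c w] p IH]; simpl; auto. intros H; apply andb_prop in H; destruct H as [H1 H2].
  apply Z.eqb_eq in H1; subst. rewrite IH by auto.
  mat_ext. unfold Madd, Mscale, Mzero. apply Cplx_ext; simpl; ring.
Qed.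

Section Derivative.
Variables (gf : R -> Mat) (z : R) (dg : ncpoly).
Hypothesis Hg : mder n n gf z (poly_mat (gf z) dg).
Hypothesis Hdg : poly_typed sn sn dg = true.

Lemma word_deriv_sound w r c : word_type w = Some (r, c) ->
  mder (dim_size r) (dim_size c) (fun y => word_mat (gf y) w) z (poly_mat (gf z) (word_deriv dg w)).
Proof.
  revert r. induction w as [|a w IH]; intros r Hw; [discriminate|].
  destruct (list_eq_dec sym_eq_dec w []) as [->|Hne].
  - simpl in Hw. inversion Hw; subst. simpl word_deriv. rewrite app_nil_r.
    destruct a; simpl; try apply mder_const.
    replace (map_words (fun v => v ++ []) dg) with dg; auto.
    clear. induction dg as [|[c v] q IH]; simpl; [auto|rewrite app_nil_r, <- IH; auto].
  - destruct (word_type_cons a w r c Hne Hw) as [-> Hw'].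
    apply mder_ext with (f := fun y => Mmul (dim_size (sym_cols a)) (sym_mat (gf y) a) (word_mat (gf y) w)).
    { intros y; rewrite word_mat_cons; auto. }
    simpl word_deriv. rewrite poly_mat_app, poly_mat_prepend with (w := [a])
      by (try apply word_deriv_nonempty, ends_in_nonempty with sn, poly_typed_ends_in with sn; auto; congruence).
    assert (Ha : mder (dim_size (sym_rows a)) (dim_size (sym_cols a)) (fun y => sym_mat (gf y) a) z
                   (if sym_eq_dec a sG then poly_mat (gf z) dg else Mzero)).
    { destruct a; simpl; auto; apply mder_const. }
    eapply mder_Meq; [|exact (mder_mul _ _ _ _ _ _ _ _ Ha (IH _ Hw'))].
    apply Meq_Madd; [|apply Meq_refl].
    destruct (sym_eq_dec a sG) as [->|]; simpl; [|rewrite Mmul_zerol; apply Meq_refl].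
    rewrite (poly_mat_append _ _ _ sn); auto. apply Meq_refl. apply (poly_typed_ends_in sn sn); auto.
Qed.

Lemma poly_deriv_sound p r c : poly_typed r c p = true ->
  mder (dim_size r) (dim_size c) (fun y => poly_mat (gf y) p) z (poly_mat (gf z) (poly_deriv dg p)).
Proof.
  intros Hp. pose proof (poly_typed_spec _ _ _ Hp) as Hs. clear Hp.
  induction p as [|[d w] p IH]; simpl; [apply mder_const|].
  rewrite poly_mat_app, poly_mat_scale. apply mder_add.
  - apply mder_scale, word_deriv_sound. eapply Hs; left; eauto.
  - apply IH. intros; eapply Hs; right; eauto.
Qed.
End Derivative.

(* The relation [S^2 G = G S^2 - G V U S G + G S V U G]. *)
Definition SSG_rhs : ncpoly :=
  [(1%Z, [sG; sS; sS]); ((-1)%Z, [sG; sV; sU; sS; sG]); (1%Z, [sG; sS; sV; sU; sG])].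

(* Rewrites the first interior occurrence of [S S G] in [pre ++ w], scanning [w]. *)
Fixpoint rewrite_SSG (pre w : word) : option ncpoly :=
  match w with
  | [] => None
  | a :: w' =>
      match w, pre with
      | sS :: sS :: sG :: ((_ :: _) as s), _ :: _ =>
          if dim_eq_dec (sym_cols (last pre sG)) sn
          then Some (map_words (fun v => pre ++ v ++ s) SSG_rhs)
          else rewrite_SSG (pre ++ [a]) w'
      | _, _ => rewrite_SSG (pre ++ [a]) w'
      end
  end.

Definition reduce_step (p : ncpoly) : ncpoly :=
  flat_map (fun cw => match rewrite_SSG [] (snd cw) with
                      | Some q => poly_scale (fst cw) q
                      | None => [cw] end) p.

Fixpoint reduce (k : nat) (p : ncpoly) : ncpoly :=
  match k with O => p | Datatypes.S k' => reduce k' (reduce_step p) end.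

Section Reduction.
Variable g : Mat.
Hypothesis HSSG : Meq n n (word_mat g [sS; sS; sG]) (poly_mat g SSG_rhs).

Lemma SSG_rhs_ends_in : ends_in sn SSG_rhs.
Proof.
  intros c v Hin; simpl in Hin; repeat destruct Hin as [Hin|Hin]; inversion Hin; subst;
    split; simpl; congruence.
Qed.

Lemma rewrite_SSG_at P Sf : P <> [] -> Sf <> [] -> sym_cols (last P sG) = sn ->
  word_mat g (P ++ [sS; sS; sG] ++ Sf) = poly_mat g (map_words (fun v => P ++ v ++ Sf) SSG_rhs).
Proof.
  intros HP HS E.
  rewrite word_mat_app, E by (auto; destruct Sf; simpl; congruence).
  rewrite word_mat_app by (auto; congruence). simpl (last [sS; sS; sG] sG). simpl dim_size.
  rewrite (Mmul_Meq_mid _ _ _ _ _ _ HSSG).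
  change (Mmul n (poly_mat g SSG_rhs)) with (Mmul (dim_size sn) (poly_mat g SSG_rhs)).
  rewrite <- (poly_mat_append g SSG_rhs Sf sn SSG_rhs_ends_in HS).
  change (Mmul n (word_mat g P)) with (Mmul (dim_size sn) (word_mat g P)). rewrite <- E.
  rewrite <- poly_mat_prepend; auto.
  intros c v Hin. apply in_map_words in Hin. destruct Hin as [v' [H1 ->]].
  destruct (SSG_rhs_ends_in _ _ H1) as [Hv' _]. destruct v'; simpl; congruence.
Qed.

Lemma rewrite_SSG_sound w pre q : rewrite_SSG pre w = Some q -> word_mat g (pre ++ w) = poly_mat g q.
Proof.
  revert pre. induction w as [|a w IH]; intros pre H; [discriminate|].
  assert (Hstep : rewrite_SSG (pre ++ [a]) w = Some q -> word_mat g (pre ++ a :: w) = poly_mat g q).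
  { intros H'. rewrite <- (IH _ H'), <- app_assoc. reflexivity. }
  simpl in H.
  destruct a; try (apply Hstep; exact H).
  destruct w as [|[] [|[] [|s0 s]]]; try (apply Hstep; exact H).
  destruct pre as [|p0 pre]; [apply Hstep; exact H|].
  destruct (dim_eq_dec (sym_cols (last (p0 :: pre) sG)) sn) as [E|]; [|apply Hstep; exact H].
  inversion H; subst q.
  change (sS :: sS :: sG :: s0 :: s) with ([sS; sS; sG] ++ (s0 :: s)).
  apply rewrite_SSG_at; congruence.
Qed.

Lemma reduce_sound k p : poly_mat g (reduce k p) = poly_mat g p.
Proof.
  revert p; induction k; intros p; simpl; auto. rewrite IHk.
  induction p as [|[c w] p IHp]; simpl; auto.
  rewrite poly_mat_app, IHp. f_equal.
  destruct (rewrite_SSG [] w) eqn:E; simpl.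
  - rewrite poly_mat_scale. apply rewrite_SSG_sound in E. simpl in E. rewrite E; auto.
  - rewrite Madd_zeror; auto.
Qed.
End Reduction.
End Interpretation.

(** * The KdV solution *)

Section Solution.
Variables (n m : nat) (S K U V : Mat).
Hypothesis HSyl : Meq n n (Madd (Mmul n S K) (Mmul n K S)) (Mmul m V U).

Definition IKXi x t := Msub Mid (Mmul n K (Xi n S x t)).
Definition Gmat x t := Mmul n (Xi n S x t) (Minv n (IKXi x t)).

Lemma IKXi_continuous x t e : 0 < e -> exists d, 0 < d /\
  forall x' t', Rabs (x' - x) < d -> Rabs (t' - t) < d ->
  forall i j, (i < n)%nat -> (j < n)%nat -> cnorm (Cadd (IKXi x' t' i j) (Copp (IKXi x t i j))) < e.
Proof.
  intros He. destruct (row_bound_exists n K) as [k [Hk0 Hk]].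
  destruct (Xi_continuous n S x t (e / (k + 1)) ltac:(apply Rdiv_lt_0_compat; lra)) as [d [Hd Hx]].
  exists d; split; auto. intros x' t' H1 H2 i j Hi Hj.
  replace (Cadd (IKXi x' t' i j) (Copp (IKXi x t i j))) with
    (Copp (Csum (fun l => Cmul (K i l) (Cadd (Xi n S x' t' l j) (Copp (Xi n S x t l j)))) n)).
  2:{ unfold IKXi, Msub, Mmul.
      rewrite (Csum_ext _ (fun l => Cadd (Cmul (K i l) (Xi n S x' t' l j))
                                        (Copp (Cmul (K i l) (Xi n S x t l j))))) by (intros; ring).
      rewrite Csum_add, Csum_opp. ring. }
  rewrite cnorm_opp. eapply Rle_lt_trans; [apply cnorm_Csum|].
  apply Rle_lt_trans with (Rsum (fun l => e / (k + 1) * cnorm (K i l)) n).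
  { apply Rsum_le. intros l Hl. eapply Rle_trans; [apply cnorm_mul|].
    rewrite Rmult_comm. apply Rmult_le_compat_r; [apply cnorm_pos|left; apply Hx; auto]. }
  rewrite Rsum_mull. pose proof (Hk i Hi).
  apply Rle_lt_trans with (e / (k + 1) * k).
  { apply Rmult_le_compat_l; [left; apply Rdiv_lt_0_compat; lra|auto]. }
  apply Rmult_lt_reg_r with (k + 1); [lra|].
  replace (e / (k + 1) * k * (k + 1)) with (e * k) by (field; lra). nra.
Qed.

Lemma IKXi_inv_near x t : Minvertible n (IKXi x t) ->
  forall e, 0 < e -> exists d, 0 < d /\ forall x' t', Rabs (x' - x) < d -> Rabs (t' - t) < d ->
    Minvertible n (IKXi x' t') /\
    forall i j, (i < n)%nat -> (j < n)%nat ->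
      cnorm (Cadd (Minv n (IKXi x' t') i j) (Copp (Minv n (IKXi x t) i j))) < e.
Proof.
  intros Hinv e He. destruct (Minv_continuous n (IKXi x t) e Hinv He) as [eta [Heta Hc]].
  destruct (IKXi_continuous x t eta Heta) as [d [Hd Hx]].
  exists d; split; [exact Hd|]. intros x' t' H1 H2. apply Hc. intros; apply Hx; auto.
Qed.

Definition S2 := Mmul n S S.
Definition S3 := Mmul n S S2.

Lemma Mpow_S_3 : Meq n n (Mpow n S 3) S3.
Proof. unfold S3, S2. simpl. rewrite !Mmul_assoc. apply Mmul_Mid_l. Qed.

Lemma sylvester_cube :
  Meq n n (Madd (Mmul n S3 K) (Mmul n K S3))
    (Madd (Msub (Mmul n S2 (Mmul m V U)) (Mmul n S (Mmul n (Mmul m V U) S))) (Mmul n (Mmul m V U) S2)).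
Proof.
  set (SY := Madd (Mmul n S K) (Mmul n K S)).
  apply Meq_trans with (Madd (Msub (Mmul n S2 SY) (Mmul n S (Mmul n SY S))) (Mmul n SY S2)).
  { unfold SY, S3, S2. mat_ring. }
  apply Meq_Madd; [apply Meq_Msub|]; [apply Meq_Mmul_r|apply Meq_Mmul_r, Meq_Mmul_l|apply Meq_Mmul_l];
    exact HSyl.
Qed.

Lemma sylvester_square :
  Meq n n (Msub (Mmul n K S2) (Mmul n S2 K)) (Msub (Mmul n (Mmul m V U) S) (Mmul n S (Mmul m V U))).
Proof.
  set (SY := Madd (Mmul n S K) (Mmul n K S)).
  apply Meq_trans with (Msub (Mmul n SY S) (Mmul n S SY)).
  { unfold SY, S2. mat_ring. }
  apply Meq_Msub; [apply Meq_Mmul_l|apply Meq_Mmul_r]; exact HSyl.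
Qed.

Definition Gx_poly : ncpoly := [((-1)%Z, [sG; sS]); ((-1)%Z, [sS; sG]); ((-1)%Z, [sG; sV; sU; sG])].

Definition Gt_poly : ncpoly :=
  [((-1)%Z, [sG; sS; sS; sS]); ((-1)%Z, [sS; sS; sS; sG]); ((-1)%Z, [sG; sS; sS; sV; sU; sG]);
   (1%Z, [sG; sS; sV; sU; sS; sG]); ((-1)%Z, [sG; sV; sU; sS; sS; sG])].

Lemma Gx_poly_spec g :
  Meq n n (Mscale (RtoC (-1)) (Madd (Madd (Mmul n g S) (Mmul n S g))
                                    (Mmul n g (Mmul n (Madd (Mmul n S K) (Mmul n K S)) g))))
          (poly_mat n m S V U g Gx_poly).
Proof.
  eapply Meq_trans; [apply Meq_Mscale, Meq_Madd, Meq_Mmul_r, Meq_Mmul_l, HSyl; apply Meq_refl|].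
  simpl. mat_ring.
Qed.

Lemma Gt_poly_spec g :
  Meq n n (Mscale (RtoC (-1)) (Madd (Madd (Mmul n g S3) (Mmul n S3 g))
                                    (Mmul n g (Mmul n (Madd (Mmul n S3 K) (Mmul n K S3)) g))))
          (poly_mat n m S V U g Gt_poly).
Proof.
  eapply Meq_trans;
    [apply Meq_Mscale, Meq_Madd, Meq_Mmul_r, Meq_Mmul_l, sylvester_cube; apply Meq_refl|].
  unfold S3, S2. simpl. mat_ring.
Qed.

Lemma SSG_spec g :
  Meq n n (Msub (Mmul n g S2) (Mmul n S2 g)) (Mmul n g (Mmul n (Msub (Mmul n K S2) (Mmul n S2 K)) g)) ->
  Meq n n (word_mat n m S V U g [sS; sS; sG]) (poly_mat n m S V U g SSG_rhs).
Proof.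
  intros Hcomm.
  apply Meq_trans with (Msub (Mmul n g S2) (Msub (Mmul n g S2) (Mmul n S2 g))).
  { unfold S2. simpl. mat_ring. }
  eapply Meq_trans; [apply Meq_Msub; [apply Meq_refl|exact Hcomm]|].
  eapply Meq_trans; [apply Meq_Msub, Meq_Mmul_r, Meq_Mmul_l, sylvester_square; apply Meq_refl|].
  unfold S2. simpl. mat_ring.
Qed.

Section AtPoint.
Variables x t : R.
Hypothesis Hinv : Minvertible n (IKXi x t).

Lemma Gmat_dx : mder n n (fun y => Gmat y t) x (poly_mat n m S V U (Gmat x t) Gx_poly).
Proof.
  eapply mder_Meq; [apply Gx_poly_spec|].
  apply (resolvent_mder n K (fun y => Xi n S y t) x S (Xi_dx n S x t) (Mcomm_S_Xi n S x t) Hinv).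
  intros e He. destruct (IKXi_inv_near x t Hinv e He) as [d [Hd Hnear]].
  exists d; split; [exact Hd|]. intros h Hh. apply Hnear.
  - replace (x + h - x) with h by ring; auto.
  - rewrite Rminus_diag, Rabs_R0; auto.
Qed.

Lemma Gmat_dt : mder n n (fun s => Gmat x s) t (poly_mat n m S V U (Gmat x t) Gt_poly).
Proof.
  eapply mder_Meq; [apply Gt_poly_spec|].
  apply (resolvent_mder n K (fun s => Xi n S x s) t S3); auto.
  - eapply mder_Meq; [|apply Xi_dt]. apply Meq_Mmul_l, Meq_Mscale, Mpow_S_3.
  - unfold S3, S2. repeat apply Mcomm_mull; apply Mcomm_S_Xi.
  - intros e He. destruct (IKXi_inv_near x t Hinv e He) as [d [Hd Hnear]].
    exists d; split; [exact Hd|]. intros h Hh. apply Hnear.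
    + rewrite Rminus_diag, Rabs_R0; auto.
    + replace (t + h - t) with h by ring; auto.
Qed.

Lemma Gmat_SSG : Meq n n (word_mat n m S V U (Gmat x t) [sS; sS; sG]) (poly_mat n m S V U (Gmat x t) SSG_rhs).
Proof.
  apply SSG_spec. destruct (Minv_spec n _ Hinv) as [H1 H2].
  apply (resolvent_commutator n K (Xi n S x t) _ H1 H2).
  unfold S2. apply Mcomm_mull; apply Mcomm_S_Xi.
Qed.
End AtPoint.
End Solution.

Definition phi_poly : ncpoly := [(1%Z, [sU; sG; sV])].
Definition u_poly := collect (poly_deriv Gx_poly phi_poly).
Definition ux_poly := collect (poly_deriv Gx_poly u_poly).
Definition uxx_poly := collect (poly_deriv Gx_poly ux_poly).
Definition uxxx_poly := collect (poly_deriv Gx_poly uxx_poly).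
Definition ut_poly := collect (poly_deriv Gt_poly u_poly).

(* Four times the left-hand side of the KdV equation. *)
Definition kdv_poly : ncpoly :=
  poly_scale 4 ut_poly ++ poly_scale (-1) uxxx_poly ++
  poly_scale (-6) (poly_mul u_poly ux_poly ++ poly_mul ux_poly u_poly).

Lemma kdv_poly_reduces_to_zero : poly_is_zero (collect (reduce 10 kdv_poly)) = true.
Proof. vm_compute. reflexivity. Qed.

Section KdV.
Variables (n m : nat) (S K U V : Mat).
Hypothesis HSyl : Meq n n (Madd (Mmul n S K) (Mmul n K S)) (Mmul m V U).

Definition poly_at (p : ncpoly) x t := poly_mat n m S V U (Gmat n S K x t) p.

Lemma Phi_poly_at x t : Phi n S K U V x t = poly_at phi_poly x t.
Proof.
  unfold Phi, poly_at, Gmat, IKXi. simpl. rewrite !Mmul_assoc.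
  mat_ext. unfold Madd, Mscale, Mzero. apply Cplx_ext; simpl; ring.
Qed.

Lemma poly_at_dx x t p : Minvertible n (IKXi n S K x t) -> poly_typed sm sm p = true ->
  mder m m (fun y => poly_at p y t) x (poly_at (collect (poly_deriv Gx_poly p)) x t).
Proof.
  intros Hinv Hp. unfold poly_at. rewrite collect_sound.
  exact (poly_deriv_sound n m S V U (fun y => Gmat n S K y t) x Gx_poly
           (Gmat_dx n m S K U V HSyl x t Hinv) eq_refl p sm sm Hp).
Qed.

Lemma poly_at_dt x t p : Minvertible n (IKXi n S K x t) -> poly_typed sm sm p = true ->
  mder m m (fun s => poly_at p x s) t (poly_at (collect (poly_deriv Gt_poly p)) x t).
Proof.
  intros Hinv Hp. unfold poly_at. rewrite collect_sound.
  exact (poly_deriv_sound n m S V U (fun s => Gmat n S K x s) t Gt_poly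
           (Gmat_dt n m S K U V HSyl x t Hinv) eq_refl p sm sm Hp).
Qed.

Lemma kdv_poly_at x t : Minvertible n (IKXi n S K x t) ->
  Meq m m
    (Msub (Msub (poly_at ut_poly x t) (Mscale (RtoC (/ 4)) (poly_at uxxx_poly x t)))
          (Mscale (RtoC (3 / 2)) (Madd (Mmul m (poly_at u_poly x t) (poly_at ux_poly x t))
                                       (Mmul m (poly_at ux_poly x t) (poly_at u_poly x t)))))
    Mzero.
Proof.
  intros Hinv.
  assert (Z : poly_mat n m S V U (Gmat n S K x t) kdv_poly = Mzero).
  { rewrite <- (reduce_sound n m S V U _ (Gmat_SSG n m S K U V HSyl x t Hinv) 10), <- collect_sound.
    apply poly_is_zero_sound, kdv_poly_reduces_to_zero. }
  unfold kdv_poly in Z. rewrite !poly_mat_app, !poly_mat_scale, !poly_mat_app in Z.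
  rewrite !(poly_mat_mul n m S V U _ _ _ sm) in Z
    by (apply (poly_typed_ends_in sm sm) || apply (ends_in_nonempty sm), (poly_typed_ends_in sm sm);
        vm_compute; reflexivity).
  change (dim_size n m sm) with m in Z. unfold poly_at.
  (* Abstract the four polynomial values so that [simpl] below does not compute them. *)
  set (a := poly_mat n m S V U (Gmat n S K x t) ut_poly) in *.
  set (b := poly_mat n m S V U (Gmat n S K x t) uxxx_poly) in *.
  set (c := Mmul m (poly_mat n m S V U (Gmat n S K x t) u_poly) (poly_mat n m S V U (Gmat n S K x t) ux_poly)) in *.
  set (d := Mmul m (poly_mat n m S V U (Gmat n S K x t) ux_poly) (poly_mat n m S V U (Gmat n S K x t) u_poly)) in *.
  clearbody a b c d. intros i j Hi Hj. apply (f_equal (fun M => M i j)) in Z.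
  unfold Madd, Msub, Mscale, Mzero in *.
  apply Cplx_ext; [apply (f_equal re) in Z|apply (f_equal im) in Z]; simpl in *; lra.
Qed.
End KdV.

Theorem mainTheorem17 (n m : nat) (S K U V : Mat) :
  (* S, K : n x n ;  U : m x n ;  V : n x m ;  S K + K S = V U *)
  Meq n n (Madd (Mmul n S K) (Mmul n K S)) (Mmul m V U) ->
  forall x t : R,
    Minvertible n (Msub Mid (Mmul n K (Xi n S x t))) ->
    exists (delta : R) (u ux uxx uxxx ut : R -> R -> Mat),
      0 < delta /\
      (forall x' t', Rabs (x' - x) < delta -> Rabs (t' - t) < delta ->
         has_dx m m (Phi n S K U V) x' t' (u x' t') /\
         has_dx m m u x' t' (ux x' t') /\
         has_dx m m ux x' t' (uxx x' t')) /\
      has_dx m m uxx x t (uxxx x t) /\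
      has_dt m m u x t (ut x t) /\
      (* u_t - 1/4 u_xxx - 3/2 (u u_x + u_x u) = 0 *)
      Meq m m
        (Msub (Msub (ut x t) (Mscale (RtoC (/ 4)) (uxxx x t)))
              (Mscale (RtoC (3 / 2))
                 (Madd (Mmul m (u x t) (ux x t)) (Mmul m (ux x t) (u x t)))))
        (fun _ _ => C0).
Proof.
  intros HSyl x t Hinv.
  destruct (IKXi_inv_near n S K x t Hinv 1 Rlt_0_1) as [d [Hd Hbox]].
  pose (u p := poly_at n m S K U V p).
  exists d, (u u_poly), (u ux_poly), (u uxx_poly), (u uxxx_poly), (u ut_poly).
  split; [exact Hd|]. split; [|split; [|split]].
  - intros x' t' Hx Ht. destruct (Hbox x' t' Hx Ht) as [Hinv' _]. split; [|split].
    + change (mder m m (fun y => Phi n S K U V y t') x' (u u_poly x' t')).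
      apply mder_ext with (fun y => u phi_poly y t'); [intros; symmetry; apply Phi_poly_at|].
      exact (poly_at_dx n m S K U V HSyl x' t' phi_poly Hinv' eq_refl).
    + exact (poly_at_dx n m S K U V HSyl x' t' u_poly Hinv' eq_refl).
    + exact (poly_at_dx n m S K U V HSyl x' t' ux_poly Hinv' eq_refl).
  - exact (poly_at_dx n m S K U V HSyl x t uxx_poly Hinv eq_refl).
  - exact (poly_at_dt n m S K U V HSyl x t u_poly Hinv eq_refl).
  - exact (kdv_poly_at n m S K U V HSyl x t Hinv).
Qed.
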